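(* Assume (A2), (A3) and (P1). Then there is a constant $c$, independent of $N$, such that for every data vector $y$ the (unique) solution $(X,U)$ of the quadratic program (QP) satisfies $$\|X\|_\omega\le c\|y\|_\infty\quad\text{and}\quad\|U\|_\omega\le c\|y\|_\infty,$$ where $\|X\|_\omega^2=|X_N|^2+\sum_{i=1}^N\omega_i|X_i|^2$, $\|U\|_\omega^2=\sum_{i=1}^N\omega_i|U_i|^2$, and $\|y\|_\infty$ is the maximum Euclidean norm of the blocks $y_{11},\dots,y_{1N},y_2,y_3,y_{41},\dots,y_{4,N-1},y_5,y_{61},\dots,y_{6N}$.
   Context: Radau collocation data: for an integer $N\ge 2$, let $-1<\tau_1<\dots<\tau_N=1$ and $\omega_1,\dots,\omega_N>0$ be the nodes and weights of the $N$-point Gauss–Radau quadrature rule on $[-1,1]$ with fixed node $+1$ ($\sum_i\omega_i=2$). Set $\tau_0=-1$. For $0\le j\le N$ let $L_j(\tau)=\prod_{i=0,i\ne j}^{N}\frac{\tau-\tau_i}{\tau_j-\tau_i}$ and let $D$ be the $N\times(N+1)$ matrix $D_{ij}=L_j'(\tau_i)$, $1\le i\le N$, $0\le j\le N$; $D_{1:N}$ is the submatrix of columns $1,\dots,N$. Matrix $\|\cdot\|_\infty$ is the largest absolute row sum; $|\cdot|$ is the Euclidean norm. (P1): $D_{1:N}$ is invertible and $\|D_{1:N}^{-1}\|_\infty\le2$. Problem data: $f:\mathbb{R}^n\times\mathbb{R}^m\to\mathbb{R}^n$, $C:\mathbb{R}^n\to\mathbb{R}$ twice continuously differentiable near the relevant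 points, $H(x,u,\lambda)=\lambda^{\mathsf T}f(x,u)$, and $(x^*,u^*,\lambda^* )$ a given continuous triple on $[-1,1]$. With $H$-derivatives evaluated at $(x^*(\tau_i),u^*(\tau_i),\lambda^*(\tau_i))$: $A_i=\nabla_xf(x^*(\tau_i),u^*(\tau_i))$, $B_i=\nabla_uf(x^*(\tau_i),u^*(\tau_i))$, $Q_i=\nabla_{xx}H$, $S_i=\nabla_{xu}H$, $R_i=\nabla_{uu}H$, $T=\nabla^2C(x^*(1))$. (A2): for some $\alpha>0$ the smallest eigenvalues of $\nabla^2C(x^*(1))$ and of $\nabla^2_{(x,u)}H(x^*(t),u^*(t),\lambda^*(t))$ exceed $\alpha$ uniformly in $t\in[-1,1]$. (A3): $\|\nabla_xf(x^*(t),u^*(t))\|_\infty\le1/4$ and $\|\nabla_xf(x^*(t),u^*(t))^{\mathsf T}\|_\infty\le1/4$ for all $t$. Data $y$: $y_{1i}\in\mathbb{R}^n$ ($1\le i\le N$), $y_2,y_3,y_5\in\mathbb{R}^n$, $y_{4i}\in\mathbb{R}^n$ ($1\le i<N$), $y_{6i}\in\mathbb{R}^m$ ($1\le i\le N$); set $y_{4N}:=y_5$. (QP): minimize over $X=(X_0,\dots,X_N)$, $U=(U_1,\dots,U_N)$ the function $\tfrac12\mathcal{Q}(X,U)+\mathcal{L}(X,U)$ subject to $\sum_{j=0}^ND_{ij}X_j=A_iX_i+B_iU_i+y_{1i}$ ($1\le i\le N$), $X_0=y_2$, where $\mathcal{Q}(X,U)=X_N^{\mathsf T}TX_N+\sum_{i=1}^N\omega_i(X_i^{\mathsf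 T}Q_iX_i+2X_i^{\mathsf T}S_iU_i+U_i^{\mathsf T}R_iU_i)$ and $\mathcal{L}(X,U)=X_0^{\mathsf T}\big(y_3+\sum_{i=1}^N\omega_iy_{4i}\big)-\sum_{i=1}^N\omega_i(y_{4i}^{\mathsf T}X_i+y_{6i}^{\mathsf T}U_i)$. *)

(* Stdlib reals.  Vectors of R^d are functions nat -> R of which only
   the coordinates 0..d-1 are used; matrices are nat -> nat -> R. *)
From Stdlib Require Import Reals Lra Lia.
Open Scope R_scope.

Definition vec := nat -> R.
Definition mat := nat -> nat -> R.

Fixpoint sumR (k : nat) (F : nat -> R) : R :=
  match k with O => 0 | S k' => sumR k' F + F k' end.
Fixpoint prodR (k : nat) (F : nat -> R) : R :=
  match k with O => 1 | S k' => prodR k' F * F k' end.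
(* maxR k F = max(0, F 0, ..., F (k-1)) ; used only for nonnegative F *)
Fixpoint maxR (k : nat) (F : nat -> R) : R :=
  match k with O => 0 | S k' => Rmax (maxR k' F) (F k') end.

Definition sum1 (k : nat) (F : nat -> R) : R := sumR k (fun i => F (S i)).
Definition max1 (k : nat) (F : nat -> R) : R := maxR k (fun i => F (S i)).

Definition dot (d : nat) (a b : vec) : R := sumR d (fun k => a k * b k).
Definition enorm (d : nat) (a : vec) : R := sqrt (dot d a a).
Definition vsub (a b : vec) : vec := fun k => a k - b k.
Definition mv (d : nat) (M : mat) (v : vec) : vec :=
  fun k => sumR d (fun l => M k l * v l).
Definition trm (M : mat) : mat := fun k l => M l k.
Definition inf_norm (r c : nat) (M : mat) : R :=
  maxR r (fun k => sumR c (fun l => Rabs (M k l))).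
Definition qform (d1 d2 : nat) (M : mat) (a b : vec) : R :=
  sumR d1 (fun k => sumR d2 (fun l => a k * M k l * b l)).

Definition is_eigenvalue (d : nat) (M : mat) (a : R) : Prop :=
  exists v : vec, (exists k, (k < d)%nat /\ v k <> 0) /\
    forall k, (k < d)%nat -> mv d M v k = a * v k.
(* "the smallest eigenvalue of M exceeds alpha" (M is a symmetric Hessian,
   so all its eigenvalues are real) *)
Definition smallest_eigenvalue_gt (d : nat) (M : mat) (alpha : R) : Prop :=
  forall a, is_eigenvalue d M a -> alpha < a.

Definition upd (v : vec) (i : nat) (s : R) : vec :=
  fun k => if Nat.eqb k i then s else v k.

Definition has_partial1 (G : vec -> R) (x : vec) (i : nat) (dv : R) : Prop :=
  derivable_pt_lim (fun s => G (upd x i s)) (x i) dv.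

(* partial derivatives of G : R^n x R^m -> R w.r.t. coordinate i of
   z = (x,u) in R^(n+m): i < n is x_i, n <= i < n+m is u_(i-n) *)
Definition zupd (n : nat) (x u : vec) (i : nat) (s : R) : vec * vec :=
  if Nat.ltb i n then (upd x i s, u) else (x, upd u (i - n)%nat s).
Definition zcoord (n : nat) (x u : vec) (i : nat) : R :=
  if Nat.ltb i n then x i else u (i - n)%nat.
Definition has_partial2 (n : nat) (G : vec -> vec -> R) (x u : vec) (i : nat) (dv : R) : Prop :=
  derivable_pt_lim (fun s => G (fst (zupd n x u i s)) (snd (zupd n x u i s)))
    (zcoord n x u i) dv.

Definition dist1 (d : nat) (x x' : vec) : R := enorm d (vsub x x').
Definition dist2 (n m : nat) (x u x' u' : vec) : R :=
  sqrt (dot n (vsub x x') (vsub x x') + dot m (vsub u u') (vsub u u')).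

Definition cont1 (d : nat) (G : vec -> R) (x : vec) : Prop :=
  forall eps, 0 < eps -> exists del, 0 < del /\
    forall x', dist1 d x' x < del -> Rabs (G x' - G x) < eps.
Definition cont2 (n m : nat) (G : vec -> vec -> R) (x u : vec) : Prop :=
  forall eps, 0 < eps -> exists del, 0 < del /\
    forall x' u', dist2 n m x' u' x u < del -> Rabs (G x' u' - G x u) < eps.

Definition open1 (d : nat) (O : vec -> Prop) : Prop :=
  forall x, O x -> exists r, 0 < r /\ forall x', dist1 d x' x < r -> O x'.
Definition open2 (n m : nat) (O : vec -> vec -> Prop) : Prop :=
  forall x u, O x u -> exists r, 0 < r /\
    forall x' u', dist2 n m x' u' x u < r -> O x' u'.

(* f : R^n x R^m -> R^n is C^2 on O, with first partials
   Df k x u i = d f_k / d z_i and second partials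
   D2f k x u i j = d/dz_j (d f_k / d z_i). *)
Definition f_C2_on (n m : nat) (f : vec -> vec -> vec)
  (Df : nat -> vec -> vec -> nat -> R) (D2f : nat -> vec -> vec -> nat -> nat -> R)
  (O : vec -> vec -> Prop) : Prop :=
  forall x u, O x u -> forall k, (k < n)%nat ->
    cont2 n m (fun x u => f x u k) x u /\
    forall i, (i < n + m)%nat ->
      has_partial2 n (fun x u => f x u k) x u i (Df k x u i) /\
      cont2 n m (fun x u => Df k x u i) x u /\
      forall j, (j < n + m)%nat ->
        has_partial2 n (fun x u => Df k x u i) x u j (D2f k x u i j) /\
        cont2 n m (fun x u => D2f k x u i j) x u.

Definition f_C2_near_traj (n m : nat) (f : vec -> vec -> vec)
  (Df : nat -> vec -> vec -> nat -> R) (D2f : nat -> vec -> vec -> nat -> nat -> R)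
  (xs us : R -> vec) : Prop :=
  exists O, open2 n m O /\ (forall t, -1 <= t <= 1 -> O (xs t) (us t)) /\
    f_C2_on n m f Df D2f O.

Definition C_C2_near (n : nat) (C : vec -> R) (DC : vec -> nat -> R)
  (D2C : vec -> nat -> nat -> R) (x0 : vec) : Prop :=
  exists O, open1 n O /\ O x0 /\
    forall x, O x -> cont1 n C x /\
      forall i, (i < n)%nat ->
        has_partial1 C x i (DC x i) /\ cont1 n (fun x => DC x i) x /\
        forall j, (j < n)%nat ->
          has_partial1 (fun x => DC x i) x j (D2C x i j) /\
          cont1 n (fun x => D2C x i j) x.

Definition cont_traj (d : nat) (g : R -> vec) : Prop :=
  forall t, -1 <= t <= 1 -> forall eps, 0 < eps -> exists del, 0 < del /\
    forall t', -1 <= t' <= 1 -> Rabs (t' - t) < del -> dist1 d (g t') (g t) < eps.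

Definition Amat (Df : nat -> vec -> vec -> nat -> R) (xs us : R -> vec) (t : R) : mat :=
  fun k l => Df k (xs t) (us t) l.
Definition Bmat (n : nat) (Df : nat -> vec -> vec -> nat -> R) (xs us : R -> vec) (t : R) : mat :=
  fun k l => Df k (xs t) (us t) (n + l)%nat.
(* Hessian w.r.t. (x,u) of H(x,u,lambda) = lambda^T f(x,u) at (x*(t),u*(t),lambda*(t)),
   an (n+m) x (n+m) matrix *)
Definition HessH (n : nat) (D2f : nat -> vec -> vec -> nat -> nat -> R)
  (xs us ls : R -> vec) (t : R) : mat :=
  fun i j => sumR n (fun k => ls t k * D2f k (xs t) (us t) i j).
Definition Qmat n D2f xs us ls t : mat := fun i j => HessH n D2f xs us ls t i j.
Definition Smat n D2f xs us ls t : mat := fun i j => HessH n D2f xs us ls t i (n + j)%nat.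
Definition Rmat n D2f xs us ls t : mat := fun i j => HessH n D2f xs us ls t (n + i)%nat (n + j)%nat.

(* tau 0 = -1 (convention), -1 < tau_1 < ... < tau_N = 1, w_i > 0, and the rule
   sum_{i=1}^N w_i p(tau_i) is exact for all polynomials of degree <= 2N-2,
   i.e. the N-point Gauss-Radau rule with fixed node +1. *)
Definition radau (N : nat) (tau w : nat -> R) : Prop :=
  tau O = -1 /\ -1 < tau 1%nat /\
  (forall i, (1 <= i < N)%nat -> tau i < tau (S i)) /\ tau N = 1 /\
  (forall i, (1 <= i <= N)%nat -> 0 < w i) /\
  forall k, (k <= 2 * N - 2)%nat ->
    sum1 N (fun i => w i * tau i ^ k) = (1 - (-1) ^ (S k)) / INR (S k).

Definition lagrange (N : nat) (tau : nat -> R) (j : nat) (s : R) : R :=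
  prodR (S N) (fun i => if Nat.eqb i j then 1 else (s - tau i) / (tau j - tau i)).

Definition is_diff_matrix (N : nat) (tau : nat -> R) (D : mat) : Prop :=
  forall i j, (1 <= i <= N)%nat -> (j <= N)%nat ->
    derivable_pt_lim (lagrange N tau j) (tau i) (D i j).

Definition P1 (N : nat) (D : mat) : Prop :=
  exists Dinv : mat,
    (forall i j, (1 <= i <= N)%nat -> (1 <= j <= N)%nat ->
       sum1 N (fun k => D i k * Dinv k j) = if Nat.eqb i j then 1 else 0) /\
    (forall i j, (1 <= i <= N)%nat -> (1 <= j <= N)%nat ->
       sum1 N (fun k => Dinv i k * D k j) = if Nat.eqb i j then 1 else 0) /\
    (forall i, (1 <= i <= N)%nat -> sum1 N (fun j => Rabs (Dinv i j)) <= 2).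

Definition y4ext (N : nat) (y4 : nat -> vec) (y5 : vec) (i : nat) : vec :=
  if Nat.eqb i N then y5 else y4 i.

Definition QP_feasible (n m N : nat) (D : mat) (A B : nat -> mat)
  (y1 : nat -> vec) (y2 : vec) (X U : nat -> vec) : Prop :=
  (forall k, (k < n)%nat -> X O k = y2 k) /\
  forall i, (1 <= i <= N)%nat -> forall k, (k < n)%nat ->
    sumR (S N) (fun j => D i j * X j k) =
      mv n (A i) (X i) k + mv m (B i) (U i) k + y1 i k.

Definition QP_cost (n m N : nat) (w : nat -> R) (T : mat) (Q S Rm : nat -> mat)
  (y3 : vec) (y4 : nat -> vec) (y5 : vec) (y6 : nat -> vec) (X U : nat -> vec) : R :=
  / 2 * (qform n n T (X N) (X N) +
         sum1 N (fun i => w i * (qform n n (Q i) (X i) (X i)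
                                 + 2 * qform n m (S i) (X i) (U i)
                                 + qform m m (Rm i) (U i) (U i))))
  + (dot n (X O) (fun k => y3 k + sum1 N (fun i => w i * y4ext N y4 y5 i k))
     - sum1 N (fun i => w i * (dot n (y4ext N y4 y5 i) (X i) + dot m (y6 i) (U i)))).

Definition QP_solution (n m N : nat) (w : nat -> R) (D : mat) (A B Q S Rm : nat -> mat)
  (T : mat) (y1 : nat -> vec) (y2 y3 : vec) (y4 : nat -> vec) (y5 : vec)
  (y6 : nat -> vec) (X U : nat -> vec) : Prop :=
  QP_feasible n m N D A B y1 y2 X U /\
  forall X' U', QP_feasible n m N D A B y1 y2 X' U' ->
    QP_cost n m N w T Q S Rm y3 y4 y5 y6 X U <= QP_cost n m N w T Q S Rm y3 y4 y5 y6 X' U'.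

Definition Xnorm (n N : nat) (w : nat -> R) (X : nat -> vec) : R :=
  sqrt (dot n (X N) (X N) + sum1 N (fun i => w i * dot n (X i) (X i))).
Definition Unorm (m N : nat) (w : nat -> R) (U : nat -> vec) : R :=
  sqrt (sum1 N (fun i => w i * dot m (U i) (U i))).
Definition ynorm (n m N : nat) (y1 : nat -> vec) (y2 y3 : vec) (y4 : nat -> vec)
  (y5 : vec) (y6 : nat -> vec) : R :=
  Rmax (max1 N (fun i => enorm n (y1 i)))
   (Rmax (enorm n y2)
    (Rmax (enorm n y3)
     (Rmax (max1 (N - 1)%nat (fun i => enorm n (y4 i)))
      (Rmax (enorm n y5) (max1 N (fun i => enorm m (y6 i))))))).

(* A feasible comparison point with zero control is built by solving the
   collocation equations with [X_0 = y_2]: since [|D_{1:N}^{-1}|_inf <= 2] and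
   [|A|_inf <= 1/4], the map [W |-> D_{1:N}^{-1} (A W + r)] is a 1/2-contraction,
   so this point is bounded by [9 |y|_inf].  Optimality of [(X, U)] against it,
   written for [Z = X - Xb] (which has [Z_0 = 0]), bounds the quadratic part of
   the cost in [(Z, U)] by cross and linear terms.  By (A2) and Schwarz's theorem
   the Hessians are symmetric with eigenvalues above [alpha], so the quadratic
   part dominates [alpha (|Z_N|^2 + sum_i w_i (|Z_i|^2 + |U_i|^2))]; Young's
   inequality absorbs the cross and linear terms, whose constants are uniform in
   [N] because the Hessian is bounded along the compact trajectory and
   [sum_i w_i = 2]. *)

From Stdlib Require Import Reals Lra Lia Psatz FunctionalExtensionality Bool.
Open Scope R_scope.

Lemma sumR_ext k F G : (forall i, (i < k)%nat -> F i = G i) -> sumR k F = sumR k G.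
Proof.
  revert F G; induction k; intros F G H; simpl; auto.
  rewrite (IHk F G), (H k); auto; intros; apply H; lia.
Qed.

Lemma sumR_plus k F G : sumR k (fun i => F i + G i) = sumR k F + sumR k G.
Proof. induction k; simpl; [ring | rewrite IHk; ring]. Qed.

Lemma sumR_scal k c F : sumR k (fun i => c * F i) = c * sumR k F.
Proof. induction k; simpl; [ring | rewrite IHk; ring]. Qed.

Lemma sumR_minus k F G : sumR k F - sumR k G = sumR k (fun i => F i - G i).
Proof. induction k; simpl; [ring | rewrite <- IHk; ring]. Qed.

Lemma sumR_const k c : sumR k (fun _ => c) = INR k * c.
Proof. induction k; simpl; [ring | rewrite IHk; destruct k; simpl; ring]. Qed.

Lemma sumR_zero k F : (forall i, (i < k)%nat -> F i = 0) -> sumR k F = 0.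
Proof. intros H. rewrite (sumR_ext k F (fun _ => 0)), sumR_const by auto. ring. Qed.

Lemma sumR_le k F G : (forall i, (i < k)%nat -> F i <= G i) -> sumR k F <= sumR k G.
Proof.
  revert F G; induction k; intros F G H; simpl; [lra |].
  assert (F k <= G k) by (apply H; lia).
  assert (sumR k F <= sumR k G) by (apply IHk; intros; apply H; lia).
  lra.
Qed.

Lemma sumR_nonneg k F : (forall i, (i < k)%nat -> 0 <= F i) -> 0 <= sumR k F.
Proof.
  intros H. replace 0 with (sumR k (fun _ => 0)) by (rewrite sumR_const; ring).
  apply sumR_le; auto.
Qed.

Lemma sumR_abs k F : Rabs (sumR k F) <= sumR k (fun i => Rabs (F i)).
Proof.
  induction k; simpl; [rewrite Rabs_R0; lra |].
  eapply Rle_trans; [apply Rabs_triang | lra].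
Qed.

Lemma sumR_swap a b (F : nat -> nat -> R) :
  sumR a (fun k => sumR b (fun l => F k l)) = sumR b (fun l => sumR a (fun k => F k l)).
Proof.
  induction a; simpl; [symmetry; apply sumR_zero; auto |].
  rewrite IHa, <- sumR_plus. reflexivity.
Qed.

Lemma sumR_split b a F : sumR (a + b) F = sumR a F + sumR b (fun k => F (a + k)%nat).
Proof.
  induction b; simpl; [rewrite Nat.add_0_r; ring |].
  rewrite Nat.add_succ_r; simpl; rewrite IHb; ring.
Qed.

Lemma sumR_shift k F : sumR (S k) F = F O + sumR k (fun i => F (S i)).
Proof.
  induction k; [simpl; ring |].
  change (sumR (S (S k)) F) with (sumR (S k) F + F (S k)).
  rewrite IHk; simpl; ring.
Qed.

Lemma sumR_single k j c :
  sumR k (fun i => if Nat.eqb i j then c else 0) = if Nat.ltb j k then c else 0.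
Proof.
  induction k; [reflexivity |].
  change (sumR (S k) (fun i => if Nat.eqb i j then c else 0))
    with (sumR k (fun i => if Nat.eqb i j then c else 0) + (if Nat.eqb k j then c else 0)).
  rewrite IHk.
  destruct (Nat.eqb_spec k j), (Nat.ltb_spec j k), (Nat.ltb_spec j (S k)); try lia; ring.
Qed.

Lemma rowsum_bound d (a v : vec) b s : 0 <= s ->
  sumR d (fun l => Rabs (a l)) <= b -> (forall l, (l < d)%nat -> Rabs (v l) <= s) ->
  Rabs (sumR d (fun l => a l * v l)) <= b * s.
Proof.
  intros Hs Ha Hv. eapply Rle_trans; [apply sumR_abs |].
  apply Rle_trans with (sumR d (fun l => s * Rabs (a l))).
  - apply sumR_le; intros. rewrite Rabs_mult, Rmult_comm.
    apply Rmult_le_compat_r; [apply Rabs_pos | auto].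
  - rewrite sumR_scal, Rmult_comm. apply Rmult_le_compat_r; auto.
Qed.

Lemma sum1_ext k F G : (forall i, (1 <= i <= k)%nat -> F i = G i) -> sum1 k F = sum1 k G.
Proof. intros; apply sumR_ext; intros; apply H; lia. Qed.
Lemma sum1_le k F G : (forall i, (1 <= i <= k)%nat -> F i <= G i) -> sum1 k F <= sum1 k G.
Proof. intros; apply sumR_le; intros; apply H; lia. Qed.
Lemma sum1_nonneg k F : (forall i, (1 <= i <= k)%nat -> 0 <= F i) -> 0 <= sum1 k F.
Proof. intros; apply sumR_nonneg; intros; apply H; lia. Qed.
Lemma sum1_plus k F G : sum1 k (fun i => F i + G i) = sum1 k F + sum1 k G.
Proof. apply sumR_plus. Qed.
Lemma sum1_scal k c F : sum1 k (fun i => c * F i) = c * sum1 k F.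
Proof. apply sumR_scal. Qed.

Lemma maxR_ge k F i : (i < k)%nat -> F i <= maxR k F.
Proof.
  induction k; intros; [lia |]; simpl.
  destruct (Nat.eq_dec i k); [subst; apply Rmax_r |].
  eapply Rle_trans; [apply IHk; lia | apply Rmax_l].
Qed.
Lemma maxR_nonneg k F : 0 <= maxR k F.
Proof. induction k; simpl; [lra | eapply Rle_trans; [apply IHk | apply Rmax_l]]. Qed.
Lemma maxR_le k F b : 0 <= b -> (forall i, (i < k)%nat -> F i <= b) -> maxR k F <= b.
Proof.
  induction k; intros; simpl; auto.
  apply Rmax_lub; [apply IHk; auto | apply H0; lia].
Qed.
Lemma max1_ge k F i : (1 <= i <= k)%nat -> F i <= max1 k F.
Proof.
  intros. unfold max1. replace i with (S (i - 1)) by lia.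
  apply (maxR_ge k (fun i => F (S i))). lia.
Qed.

Lemma dot_sq_nonneg d a : 0 <= dot d a a.
Proof. apply sumR_nonneg; intros; nra. Qed.

Lemma dot_ge_coord d a k : (k < d)%nat -> a k * a k <= dot d a a.
Proof.
  revert k; induction d; intros k Hk; [lia |]. unfold dot in *; simpl.
  destruct (Nat.eq_dec k d).
  - subst. pose proof (dot_sq_nonneg d a); unfold dot in *; lra.
  - assert (a k * a k <= sumR d (fun k => a k * a k)) by (apply IHd; lia). nra.
Qed.

Lemma dot_eq0_coord d v : dot d v v = 0 -> forall k, (k < d)%nat -> v k = 0.
Proof. intros H k Hk. pose proof (dot_ge_coord d v k Hk). nra. Qed.

Lemma dot_shift d v : dot (S d) v v = v O * v O + dot d (fun k => v (S k)) (fun k => v (S k)).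
Proof. apply sumR_shift. Qed.

Lemma dot_plusl d a a' b : dot d (fun k => a k + a' k) b = dot d a b + dot d a' b.
Proof. unfold dot. rewrite <- sumR_plus. apply sumR_ext; intros; ring. Qed.
Lemma dot_plusr d a b b' : dot d a (fun k => b k + b' k) = dot d a b + dot d a b'.
Proof. unfold dot. rewrite <- sumR_plus. apply sumR_ext; intros; ring. Qed.
Lemma dot_zero_l d a b : (forall k, (k < d)%nat -> a k = 0) -> dot d a b = 0.
Proof. intros. apply sumR_zero; intros. rewrite H; auto; ring. Qed.
Lemma dot_zero_r d a : dot d a (fun _ => 0) = 0.
Proof. apply sumR_zero; intros; ring. Qed.

Lemma dot_sum_le d a b :
  dot d (fun k => a k + b k) (fun k => a k + b k) <= 2 * dot d a a + 2 * dot d b b.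
Proof.
  unfold dot. rewrite <- !sumR_scal, <- sumR_plus. apply sumR_le; intros.
  pose proof (Rle_0_sqr (a i - b i)). unfold Rsqr in *. nra.
Qed.

Lemma dot_bounded d a M : (forall k, (k < d)%nat -> Rabs (a k) <= M) -> dot d a a <= INR d * (M * M).
Proof.
  intros H. unfold dot. rewrite <- sumR_const. apply sumR_le; intros i Hi.
  specialize (H i Hi). pose proof (Rabs_pos (a i)).
  replace (a i * a i) with (Rabs (a i) * Rabs (a i)) by (rewrite <- Rabs_mult; apply Rabs_pos_eq; nra).
  apply Rmult_le_compat; auto.
Qed.

Lemma enorm_sq d v : enorm d v * enorm d v = dot d v v.
Proof. apply sqrt_sqrt, dot_sq_nonneg. Qed.

Lemma enorm_ge_coord d a k : (k < d)%nat -> Rabs (a k) <= enorm d a.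
Proof.
  intros. unfold enorm. rewrite <- sqrt_Rsqr_abs. apply sqrt_le_1_alt.
  apply dot_ge_coord; auto.
Qed.

Definition symm (d : nat) (M : mat) : Prop :=
  forall i j, (i < d)%nat -> (j < d)%nat -> M i j = M j i.
Definition psd (d : nat) (M : mat) : Prop := forall v, 0 <= qform d d M v v.
Definition injective_mat (d : nat) (M : mat) : Prop :=
  forall v, (forall k, (k < d)%nat -> mv d M v k = 0) -> forall k, (k < d)%nat -> v k = 0.

Lemma qform_plusl d1 d2 M a a' b :
  qform d1 d2 M (fun k => a k + a' k) b = qform d1 d2 M a b + qform d1 d2 M a' b.
Proof.
  unfold qform. rewrite <- sumR_plus. apply sumR_ext; intros.
  rewrite <- sumR_plus. apply sumR_ext; intros; ring.
Qed.
Lemma qform_plusr d1 d2 M a b b' :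
  qform d1 d2 M a (fun k => b k + b' k) = qform d1 d2 M a b + qform d1 d2 M a b'.
Proof.
  unfold qform. rewrite <- sumR_plus. apply sumR_ext; intros.
  rewrite <- sumR_plus. apply sumR_ext; intros; ring.
Qed.
Lemma qform_zero_l d1 d2 M a b : (forall k, (k < d1)%nat -> a k = 0) -> qform d1 d2 M a b = 0.
Proof. intros. apply sumR_zero; intros. apply sumR_zero; intros. rewrite H; auto; ring. Qed.
Lemma qform_zero_r d1 d2 M a : qform d1 d2 M a (fun _ => 0) = 0.
Proof. apply sumR_zero; intros; apply sumR_zero; intros; ring. Qed.

Definition shift_diag (M : mat) (a : R) : mat :=
  fun k l => M k l + (if Nat.eqb k l then a else 0).

Lemma shift_diag_symm d M a : symm d M -> symm d (shift_diag M a).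
Proof.
  intros H i j Hi Hj. unfold shift_diag. rewrite H by auto.
  destruct (Nat.eqb_spec i j), (Nat.eqb_spec j i); try lia; auto.
Qed.

Lemma qform_shift_diag d M a v :
  qform d d (shift_diag M a) v v = qform d d M v v + a * dot d v v.
Proof.
  unfold qform, dot, shift_diag. rewrite <- sumR_scal, <- sumR_plus. apply sumR_ext; intros.
  rewrite (sumR_ext d _ (fun l => v i * M i l * v l + (if Nat.eqb l i then a * (v i * v i) else 0))).
  - rewrite sumR_plus, sumR_single. destruct (Nat.ltb_spec i d); [ring | lia].
  - intros. destruct (Nat.eqb_spec i i0), (Nat.eqb_spec i0 i); try lia; subst; ring.
Qed.

Lemma mv_shift_diag d M a v k : (k < d)%nat ->
  mv d (shift_diag M a) v k = mv d M v k + a * v k.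
Proof.
  intros. unfold mv, shift_diag.
  rewrite (sumR_ext d _ (fun l => M k l * v l + (if Nat.eqb l k then a * v k else 0))).
  - rewrite sumR_plus, sumR_single. destruct (Nat.ltb_spec k d); [ring | lia].
  - intros. destruct (Nat.eqb_spec k i), (Nat.eqb_spec i k); try lia; subst; ring.
Qed.

Lemma qform_abs_le d M v :
  Rabs (qform d d M v v) <= sumR d (fun k => sumR d (fun l => Rabs (M k l))) * dot d v v.
Proof.
  unfold qform. eapply Rle_trans; [apply sumR_abs |].
  rewrite Rmult_comm, <- sumR_scal. apply sumR_le; intros.
  eapply Rle_trans; [apply sumR_abs |]. rewrite <- sumR_scal. apply sumR_le; intros.
  pose proof (enorm_ge_coord d v i H). pose proof (enorm_ge_coord d v i0 H0).
  rewrite <- enorm_sq, !Rabs_mult.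
  pose proof (Rabs_pos (v i)). pose proof (Rabs_pos (v i0)). pose proof (Rabs_pos (M i i0)).
  assert (Rabs (v i) * Rabs (v i0) <= enorm d v * enorm d v) by (apply Rmult_le_compat; auto).
  nra.
Qed.

Definition unit_vec (p : nat) (a : R) : vec := fun k => if Nat.eqb k p then a else 0.

Lemma qform_unit_vec d1 d2 M p q a b : (p < d1)%nat -> (q < d2)%nat ->
  qform d1 d2 M (unit_vec p a) (unit_vec q b) = a * M p q * b.
Proof.
  intros. unfold qform.
  rewrite (sumR_ext d1 _ (fun k => if Nat.eqb k p then a * M p q * b else 0)).
  { rewrite sumR_single. destruct (Nat.ltb_spec p d1); [auto | lia]. }
  intros. rewrite (sumR_ext d2 _ (fun l => if Nat.eqb l q then unit_vec p a i * M i q * b else 0)).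
  - rewrite sumR_single. destruct (Nat.ltb_spec q d2); try lia. unfold unit_vec.
    destruct (Nat.eqb_spec i p); subst; ring.
  - intros. unfold unit_vec at 2. destruct (Nat.eqb_spec i0 q); subst; ring.
Qed.

Definition schur (C : mat) : mat := fun k l => C (S k) (S l) - C (S k) O * C O (S l) / C O O.

Lemma qform_schur d C v : symm (S d) C -> C O O <> 0 ->
  qform (S d) (S d) C v v =
  C O O * (v O + sumR d (fun l => C O (S l) * v (S l)) / C O O) ^ 2
  + qform d d (schur C) (fun k => v (S k)) (fun k => v (S k)).
Proof.
  intros Hs H0. unfold qform. rewrite !sumR_shift.
  rewrite (sumR_ext d (fun i => sumR (S d) (fun l => v (S i) * C (S i) l * v l))
    (fun i => v (S i) * C O (S i) * v O + sumR d (fun l => v (S i) * C (S i) (S l) * v (S l)))).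
  2:{ intros. rewrite sumR_shift, (Hs (S i) O) by lia. reflexivity. }
  rewrite sumR_plus. unfold schur.
  rewrite (sumR_ext d (fun k => sumR d (fun l => v (S k) * (C (S k) (S l) - C (S k) O * C O (S l) / C O O) * v (S l)))
    (fun k => sumR d (fun l => v (S k) * C (S k) (S l) * v (S l))
              + (- (v (S k) * C (S k) O / C O O)) * sumR d (fun l => C O (S l) * v (S l)))).
  2:{ intros. rewrite <- sumR_scal, <- sumR_plus. apply sumR_ext; intros. field. auto. }
  rewrite sumR_plus.
  rewrite (sumR_ext d (fun k => - (v (S k) * C (S k) O / C O O) * sumR d (fun l => C O (S l) * v (S l)))
    (fun k => (- (sumR d (fun l => C O (S l) * v (S l))) / C O O) * (C O (S k) * v (S k)))).
  2:{ intros. rewrite (Hs (S i) O) by lia. field. auto. }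
  rewrite (sumR_ext d (fun i => v (S i) * C O (S i) * v O) (fun i => v O * (C O (S i) * v (S i)))) by (intros; ring).
  rewrite (sumR_ext d (fun i => v O * C O (S i) * v (S i)) (fun i => v O * (C O (S i) * v (S i)))) by (intros; ring).
  rewrite !sumR_scal. field. auto.
Qed.

(* The vector completing [v'] so that the first coordinate of [C v] vanishes. *)
Definition schur_lift (C : mat) (d : nat) (v' : vec) : vec :=
  fun j => match j with O => - sumR d (fun l => C O (S l) * v' l) / C O O | S j' => v' j' end.

Lemma mv_schur d C v' k : symm (S d) C -> C O O <> 0 -> (k < d)%nat ->
  mv d (schur C) v' k = mv (S d) C (schur_lift C d v') (S k).
Proof.
  intros Hs H0 Hk. unfold mv, schur. rewrite sumR_shift. simpl.
  rewrite (sumR_ext d (fun l => (C (S k) (S l) - C (S k) O * C O (S l) / C O O) * v' l)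
    (fun l => C (S k) (S l) * v' l + (- (C (S k) O / C O O)) * (C O (S l) * v' l))).
  - rewrite sumR_plus, sumR_scal. field. auto.
  - intros. field; auto.
Qed.

Lemma psd_diag d C p : psd d C -> (p < d)%nat -> 0 <= C p p.
Proof. intros H Hp. specialize (H (unit_vec p 1)). rewrite qform_unit_vec in H; auto. lra. Qed.

Lemma schur_pivot_pos d C : symm (S d) C -> psd (S d) C -> injective_mat (S d) C -> 0 < C O O.
Proof.
  intros Hs Hp Hk. destruct (psd_diag (S d) C O Hp ltac:(lia)) as [| H]; auto. exfalso.
  (* a vanishing diagonal entry of a psd matrix kills its whole row *)
  assert (Hz : forall l, (l < S d)%nat -> C O l = 0).
  { intros l Hl. destruct (Nat.eq_dec l O); [subst; auto |].
    destruct (Req_dec (C O l) 0) as [| Hne]; auto. exfalso.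
    set (s := - (C l l + 1) / (2 * C O l)).
    specialize (Hp (fun k => unit_vec O s k + unit_vec l 1 k)).
    rewrite qform_plusl, !qform_plusr, !qform_unit_vec in Hp by lia.
    rewrite <- H, <- (Hs O l) in Hp by lia.
    assert (s * C O l = - (C l l + 1) / 2) by (unfold s; field; auto).
    lra. }
  assert (unit_vec O 1 O = 0); [| unfold unit_vec in *; simpl in *; lra].
  apply Hk; [| lia]. intros k Hk'. unfold mv.
  rewrite (sumR_ext (S d) _ (fun l => if Nat.eqb l O then C k O else 0)).
  - rewrite sumR_single. simpl. rewrite Hs by lia. apply Hz; lia.
  - intros. unfold unit_vec. destruct (Nat.eqb_spec i O); subst; ring.
Qed.

Section SchurComplement.

Variables (d : nat) (C : mat).
Hypotheses (Hs : symm (S d) C) (Hp : psd (S d) C) (Hk : injective_mat (S d) C).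

Let Hc : 0 < C O O := schur_pivot_pos d C Hs Hp Hk.

Lemma schur_symm : symm d (schur C).
Proof.
  intros i j Hi Hj. unfold schur.
  rewrite (Hs (S i) (S j)), (Hs (S i) O), (Hs O (S j)) by lia.
  unfold Rdiv. ring.
Qed.

Lemma schur_psd : psd d (schur C).
Proof.
  intros v'. pose proof (Hp (schur_lift C d v')) as H.
  rewrite qform_schur in H by (auto; lra). simpl in H.
  replace (- sumR d (fun l => C O (S l) * v' l) / C O O + sumR d (fun l => C O (S l) * v' l) / C O O)
    with 0 in H by (field; lra).
  rewrite !Rmult_0_l, Rmult_0_r, Rplus_0_l in H. exact H.
Qed.

Lemma schur_injective : injective_mat d (schur C).
Proof.
  intros v' Hv k Hkd.
  assert (H : forall k, (k < S d)%nat -> mv (S d) C (schur_lift C d v') k = 0).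
  { intros [| k0] Hk0.
    - unfold mv. rewrite sumR_shift. simpl. field. lra.
    - rewrite <- (mv_schur d C v' k0 Hs ltac:(lra) ltac:(lia)). apply Hv; lia. }
  exact (Hk _ H (S k) ltac:(lia)).
Qed.

(* Coercivity of the Schur complement transfers to [C]: split [v O] off via
   [v O = w - p / C O O] and absorb [p] by Cauchy-Schwarz. *)
Lemma qform_coercive_of_schur dl : 0 < dl ->
  (forall v', dl * dot d v' v' <= qform d d (schur C) v' v') ->
  exists delta, 0 < delta /\ forall v, delta * dot (S d) v v <= qform (S d) (S d) C v v.
Proof.
  intros Hdl Hb.
  set (A := sumR d (fun l => Rabs (C O (S l)))).
  assert (HA : 0 <= A) by (apply sumR_nonneg; intros; apply Rabs_pos).
  set (K := 1 + 2 * (A / C O O) * (A / C O O)).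
  assert (HK : 1 <= K) by (unfold K; nra).
  set (de := Rmin (C O O / 2) (dl / K)).
  assert (Hde : 0 < de) by (apply Rmin_pos; [lra | apply Rdiv_lt_0_compat; lra]).
  assert (HdeK : de * K <= dl).
  { apply Rmult_le_reg_r with (/ K); [apply Rinv_0_lt_compat; lra |].
    replace (de * K * / K) with de by (field; lra). apply Rmin_r. }
  pose proof (Rmin_l (C O O / 2) (dl / K)) as Hde2. fold de in Hde2.
  exists de. split; auto. intros v.
  rewrite qform_schur by (auto; lra). rewrite dot_shift.
  set (v' := fun k => v (S k)). specialize (Hb v').
  set (p := sumR d (fun l => C O (S l) * v' l)).
  change (sumR d (fun l => C O (S l) * v (S l))) with p.
  set (w := v O + p / C O O).
  assert (Hp2 : p * p <= A * A * dot d v' v').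
  { assert (Rabs p <= A * enorm d v')
      by (apply rowsum_bound; [apply sqrt_pos | apply Rle_refl | intros; apply enorm_ge_coord; auto]).
    pose proof (Rabs_pos p). pose proof (sqrt_pos (dot d v' v')).
    replace (p * p) with (Rabs p * Rabs p) by (rewrite <- Rabs_mult; apply Rabs_pos_eq; nra).
    rewrite <- enorm_sq. unfold enorm in *. nra. }
  assert (Hv0 : v O * v O <= 2 * (w * w) + 2 * (A / C O O) * (A / C O O) * dot d v' v').
  { replace (v O) with (w - p / C O O) by (unfold w; ring).
    assert (p / C O O * (p / C O O) <= A / C O O * (A / C O O) * dot d v' v').
    { replace (p / C O O * (p / C O O)) with (p * p / (C O O * C O O)) by (field; lra).
      replace (A / C O O * (A / C O O) * dot d v' v') with (A * A * dot d v' v' / (C O O * C O O))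
        by (field; lra).
      apply Rmult_le_compat_r; [left; apply Rinv_0_lt_compat; nra | auto]. }
    set (q := p / C O O) in *. pose proof (Rle_0_sqr (w + q)). unfold Rsqr in *. nra. }
  pose proof (dot_sq_nonneg d v').
  assert (de * (v O * v O) <= de * (2 * (w * w)) + de * (2 * (A / C O O) * (A / C O O)) * dot d v' v')
    by nra.
  assert (de * dot d v' v' + de * (2 * (A / C O O) * (A / C O O)) * dot d v' v' = de * K * dot d v' v')
    by (unfold K; ring).
  assert (de * K * dot d v' v' <= dl * dot d v' v') by nra.
  fold w. simpl. nra.
Qed.

End SchurComplement.

Lemma qform_coercive_of_psd_injective d C : symm d C -> psd d C -> injective_mat d C ->
  exists delta, 0 < delta /\ forall v, delta * dot d v v <= qform d d C v v.
Proof.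
  revert C; induction d; intros C Hs Hp Hk.
  - exists 1. split; [lra |]. intros. unfold dot, qform; simpl. lra.
  - destruct (IHd (schur C) (schur_symm d C Hs) (schur_psd d C Hs Hp Hk) (schur_injective d C Hs Hp Hk))
      as [dl [Hdl Hb]].
    exact (qform_coercive_of_schur d C Hs Hp Hk dl Hdl Hb).
Qed.

(* Only real eigenvectors are available.  If [qform B] takes negative values, let
   [t0 > 0] be the largest value of [- qform B v v / |v|^2]; then [B + t0] is psd,
   and injective since [- t0] is not an eigenvalue, hence coercive, contradicting
   the maximality of [t0]. *)
Lemma psd_of_eigenvalues_pos d B : symm d B ->
  (forall a, is_eigenvalue d B a -> 0 < a) -> psd d B.
Proof.
  intros Hs He.
  assert (Hdz : forall v (N : mat), dot d v v <= 0 -> qform d d N v v = 0).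
  { intros. apply qform_zero_l, dot_eq0_coord. pose proof (dot_sq_nonneg d v). lra. }
  intros v0. destruct (Rle_lt_dec 0 (qform d d B v0 v0)) as [| Hneg]; auto. exfalso.
  assert (Hd0 : 0 < dot d v0 v0).
  { destruct (Rle_lt_dec (dot d v0 v0) 0) as [H |]; auto. rewrite (Hdz v0 B H) in Hneg. lra. }
  set (E := fun t => exists v, 0 < dot d v v /\ t * dot d v v = - qform d d B v v).
  assert (Hbd : bound E).
  { exists (sumR d (fun k => sumR d (fun l => Rabs (B k l)))). intros t [v [Hv Ht]].
    pose proof (qform_abs_le d B v).
    apply Rmult_le_reg_r with (dot d v v); auto. rewrite Ht.
    pose proof (Rabs_Ropp (qform d d B v v)). pose proof (RRle_abs (- qform d d B v v)). lra. }
  assert (Ev : E (- qform d d B v0 v0 / dot d v0 v0)) by (exists v0; split; auto; field; lra).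
  destruct (completeness E Hbd (ex_intro _ _ Ev)) as [t0 [Hub Hlub]].
  assert (Ht0 : 0 < t0).
  { pose proof (Hub _ Ev).
    assert (0 < - qform d d B v0 v0 / dot d v0 v0) by (apply Rdiv_lt_0_compat; lra). lra. }
  set (Cm := shift_diag B t0).
  assert (HC : forall v, qform d d Cm v v = qform d d B v v + t0 * dot d v v)
    by (intros; apply qform_shift_diag).
  assert (HCp : psd d Cm).
  { intros v. rewrite HC. destruct (Rle_lt_dec (dot d v v) 0) as [H | H].
    - rewrite (Hdz v B H). pose proof (dot_sq_nonneg d v). nra.
    - assert (- qform d d B v v / dot d v v <= t0) by (apply Hub; exists v; split; auto; field; lra).
      apply Rmult_le_compat_r with (r := dot d v v) in H0; [| lra].
      replace (- qform d d B v v / dot d v v * dot d v v) with (- qform d d B v v) in H0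
        by (field; lra).
      lra. }
  assert (HCk : injective_mat d Cm).
  { intros v Hv k Hk. destruct (Req_dec (v k) 0); auto. exfalso.
    assert (0 < - t0); [| lra]. apply He. exists v. split; [exists k; auto |].
    intros k' Hk'. specialize (Hv k' Hk'). unfold Cm in Hv.
    rewrite mv_shift_diag in Hv by auto. lra. }
  destruct (qform_coercive_of_psd_injective d Cm (shift_diag_symm d B t0 Hs) HCp HCk)
    as [de [Hde Hq]].
  assert (t0 <= t0 - de); [| lra].
  apply Hlub. intros t [v [Hv Ht]]. specialize (Hq v). rewrite HC in Hq.
  apply Rmult_le_reg_r with (dot d v v); auto. rewrite Ht. lra.
Qed.

Lemma qform_ge_of_smallest_eigenvalue_gt d M alpha :
  symm d M -> smallest_eigenvalue_gt d M alpha ->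
  forall v, alpha * dot d v v <= qform d d M v v.
Proof.
  intros Hs He v.
  assert (H : psd d (shift_diag M (- alpha))).
  { apply psd_of_eigenvalues_pos; [apply shift_diag_symm; auto |].
    intros a [u [Hu Hmv]]. assert (alpha < a + alpha); [| lra].
    apply He. exists u. split; auto. intros k Hk. specialize (Hmv k Hk).
    rewrite mv_shift_diag in Hmv by auto. lra. }
  specialize (H v). rewrite qform_shift_diag in H. lra.
Qed.

Fixpoint is_poly (d : nat) (f : R -> R) : Prop :=
  match d with
  | O => exists c, forall s, f s = c
  | S d' => exists g c, is_poly d' g /\ forall s, f s = s * g s + c
  end.

Lemma is_poly_ext d f g : (forall s, f s = g s) -> is_poly d f -> is_poly d g.
Proof.
  destruct d; simpl; intros E [a Ha].
  - exists a; intros; rewrite <- E; auto.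
  - destruct Ha as [c [H1 H2]]. exists a, c; split; auto; intros; rewrite <- E; auto.
Qed.

Lemma is_poly_const d c : is_poly d (fun _ => c).
Proof.
  revert c; induction d; intros c; simpl; [exists c; auto |].
  exists (fun _ => 0), c; split; [apply IHd | intros; ring].
Qed.

Lemma is_poly_S d f : is_poly d f -> is_poly (S d) f.
Proof.
  revert f; induction d; intros f H.
  - destruct H as [c Hc]. exists (fun _ => 0), c. split; [exists 0; auto |]. intros; rewrite Hc; ring.
  - destruct H as [g [c [Hg Hf]]]. exists g, c. split; auto.
Qed.

Lemma is_poly_plus d f g : is_poly d f -> is_poly d g -> is_poly d (fun s => f s + g s).
Proof.
  revert f g; induction d; simpl; intros f g [a Ha] [b Hb].
  - exists (a + b); intros; rewrite Ha, Hb; auto.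
  - destruct Ha as [c [Ha1 Ha2]], Hb as [e [Hb1 Hb2]].
    exists (fun s => a s + b s), (c + e). split; [apply IHd; auto |]. intros; rewrite Ha2, Hb2; ring.
Qed.

Lemma is_poly_scal d k f : is_poly d f -> is_poly d (fun s => k * f s).
Proof.
  revert f; induction d; simpl; intros f [a Ha].
  - exists (k * a); intros; rewrite Ha; auto.
  - destruct Ha as [c [H1 H2]]. exists (fun s => k * a s), (k * c).
    split; [apply IHd; auto | intros; rewrite H2; ring].
Qed.

Lemma is_poly_mulX d f : is_poly d f -> is_poly (S d) (fun s => s * f s).
Proof. intros. exists f, 0. split; auto. intros; ring. Qed.

Lemma is_poly_mul_linear d f b k : is_poly d f -> is_poly (S d) (fun s => f s * ((s - b) * k)).
Proof.
  intros. apply is_poly_ext with (fun s => k * (s * f s) + (- (b * k)) * f s); [intros; ring |].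
  apply is_poly_plus; [apply is_poly_scal, is_poly_mulX | apply is_poly_S, is_poly_scal]; auto.
Qed.

Lemma is_poly_factor d f r : is_poly (S d) f -> f r = 0 ->
  exists q, is_poly d q /\ forall s, f s = (s - r) * q s.
Proof.
  revert f; induction d; intros f H Hr.
  - destruct H as [g [c [[a Ha] Hf]]]. exists (fun _ => a). split; [exists a; auto |].
    intros. rewrite Hf, Ha in *. assert (c = - r * a) by lra. subst. ring.
  - destruct H as [g [c [Hg Hf]]].
    destruct (IHd (fun s => g s - g r)) as [q' [Hq' Hq'e]];
      [apply is_poly_plus; auto; apply is_poly_const | ring |].
    exists (fun s => s * q' s + g r). split.
    + apply is_poly_plus; [apply is_poly_mulX; auto | apply is_poly_const].
    + intros. rewrite Hf in *. assert (c = - r * g r) by lra. subst.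
      specialize (Hq'e s). replace (g s) with ((g s - g r) + g r) by ring. rewrite Hq'e. ring.
Qed.

Lemma is_poly_roots d f (r : nat -> R) : is_poly d f ->
  (forall i j, (i <= d)%nat -> (j <= d)%nat -> i <> j -> r i <> r j) ->
  (forall i, (i <= d)%nat -> f (r i) = 0) -> forall s, f s = 0.
Proof.
  revert f; induction d; intros f H Hd Hz s.
  - destruct H as [c Hc]. rewrite Hc, <- (Hc (r O)). apply Hz; lia.
  - destruct (is_poly_factor d f (r (S d)) H) as [q [Hq Hqe]]; [apply Hz; lia |].
    rewrite Hqe. replace (q s) with 0; [ring |]. symmetry.
    apply (IHd q Hq); [intros; apply Hd; lia |].
    intros i Hi. assert (r i <> r (S d)) by (apply Hd; lia).
    specialize (Hqe (r i)). rewrite Hz in Hqe by lia.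
    symmetry in Hqe. apply Rmult_integral in Hqe as [|]; auto. lra.
Qed.

Lemma prodR_zero k F j : (j < k)%nat -> F j = 0 -> prodR k F = 0.
Proof.
  induction k; intros; [lia |]; simpl.
  destruct (Nat.eq_dec j k); [subst; rewrite H0; ring | rewrite IHk; [ring | lia | auto]].
Qed.

Lemma prodR_one k F : (forall i, (i < k)%nat -> F i = 1) -> prodR k F = 1.
Proof. induction k; intros; simpl; auto. rewrite IHk, H; [ring | lia | intros; apply H; lia]. Qed.

Lemma lagrange_node N tau j k : (j <= N)%nat -> (k <= N)%nat ->
  (forall a b, (a <= N)%nat -> (b <= N)%nat -> a <> b -> tau a <> tau b) ->
  lagrange N tau j (tau k) = if Nat.eqb j k then 1 else 0.
Proof.
  intros Hj Hk Hd. unfold lagrange. destruct (Nat.eqb_spec j k).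
  - subst. apply prodR_one. intros. destruct (Nat.eqb_spec i k); auto.
    field. assert (tau k <> tau i) by (apply Hd; lia). lra.
  - apply (prodR_zero _ _ k); [lia |]. destruct (Nat.eqb_spec k j); [lia |]. unfold Rdiv; ring.
Qed.

Lemma lagrange_prefix_is_poly (tau : nat -> R) j k :
  is_poly (if Nat.ltb j k then k - 1 else k)%nat
    (fun s => prodR k (fun i => if Nat.eqb i j then 1 else (s - tau i) / (tau j - tau i))).
Proof.
  induction k; [destruct (Nat.ltb_spec j 0); [lia | apply (is_poly_const 0 1)] |].
  change (fun s => prodR (S k) (fun i => if Nat.eqb i j then 1 else (s - tau i) / (tau j - tau i)))
    with (fun s => prodR k (fun i => if Nat.eqb i j then 1 else (s - tau i) / (tau j - tau i)) *
                   (if Nat.eqb k j then 1 else (s - tau k) / (tau j - tau k))).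
  revert IHk; destruct (Nat.ltb_spec j k), (Nat.ltb_spec j (S k)), (Nat.eqb_spec k j);
    try lia; intro IHk.
  - replace (S k - 1)%nat with (S (k - 1)) by lia. apply is_poly_mul_linear. auto.
  - subst j. replace (S k - 1)%nat with k by lia.
    eapply is_poly_ext; [| exact IHk]. intros; simpl; ring.
  - apply is_poly_mul_linear. auto.
Qed.

Lemma lagrange_is_poly N tau j : (j <= N)%nat -> is_poly N (lagrange N tau j).
Proof.
  intros. pose proof (lagrange_prefix_is_poly tau j (S N)) as H'.
  destruct (Nat.ltb_spec j (S N)); [| lia]. replace (S N - 1)%nat with N in H' by lia. exact H'.
Qed.

Lemma sum_lagrange_one N tau :
  (forall a b, (a <= N)%nat -> (b <= N)%nat -> a <> b -> tau a <> tau b) ->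
  forall s, sumR (S N) (fun j => lagrange N tau j s) = 1.
Proof.
  intros Hd.
  assert (Hp : forall k, (k <= S N)%nat -> is_poly N (fun s => sumR k (fun j => lagrange N tau j s))).
  { induction k; intros; simpl; [apply is_poly_const |].
    apply is_poly_plus; [apply IHk; lia | apply lagrange_is_poly; lia]. }
  assert (H : forall s, sumR (S N) (fun j => lagrange N tau j s) - 1 = 0).
  { apply (is_poly_roots N _ tau); auto.
    - apply is_poly_plus; [apply Hp; lia | apply is_poly_const].
    - intros. rewrite (sumR_ext _ _ (fun j => if Nat.eqb j i then 1 else 0)).
      + rewrite sumR_single. destruct (Nat.ltb_spec i (S N)); [ring | lia].
      + intros; apply lagrange_node; auto; lia. }
  intros s. specialize (H s). lra.
Qed.

Lemma derivable_pt_lim_sumR k (F : nat -> R -> R) (dF : nat -> R) x :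
  (forall j, (j < k)%nat -> derivable_pt_lim (F j) x (dF j)) ->
  derivable_pt_lim (fun s => sumR k (fun j => F j s)) x (sumR k dF).
Proof.
  induction k; intros; simpl; [apply derivable_pt_lim_const |].
  apply (derivable_pt_lim_plus (fun s => sumR k (fun j => F j s)) (F k));
    [apply IHk; intros; apply H; lia | apply H; lia].
Qed.

(* The Lagrange basis sums to the constant 1, whose derivative vanishes. *)
Lemma diff_matrix_rowsum N tau D : is_diff_matrix N tau D ->
  (forall a b, (a <= N)%nat -> (b <= N)%nat -> a <> b -> tau a <> tau b) ->
  forall i, (1 <= i <= N)%nat -> sumR (S N) (fun j => D i j) = 0.
Proof.
  intros HD Hd i Hi.
  assert (H : derivable_pt_lim (fun s => sumR (S N) (fun j => lagrange N tau j s)) (tau i)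
                (sumR (S N) (fun j => D i j)))
    by (apply derivable_pt_lim_sumR; intros; apply HD; auto; lia).
  assert (E : (fun s => sumR (S N) (fun j => lagrange N tau j s)) = fun _ => 1)
    by (apply functional_extensionality; intros; apply sum_lagrange_one; auto).
  rewrite E in H. eapply uniqueness_limite; [apply H | apply derivable_pt_lim_const].
Qed.

Lemma mixed_difference_mvt (F Fa Fab : R -> R -> R) a b h : 0 < h ->
  (forall s t, a <= s <= a + h -> b <= t <= b + h ->
     derivable_pt_lim (fun s' => F s' t) s (Fa s t) /\
     derivable_pt_lim (fun t' => Fa s t') t (Fab s t)) ->
  exists xi eta, a < xi < a + h /\ b < eta < b + h /\
    F (a + h) (b + h) - F (a + h) b - (F a (b + h) - F a b) = Fab xi eta * h * h.
Proof.
  intros Hh Hd.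
  destruct (MVT_cor2 (fun s => F s (b + h) - F s b) (fun s => Fa s (b + h) - Fa s b) a (a + h))
    as [xi [E1 Hxi]]; [lra | |].
  { intros s Hs. apply (derivable_pt_lim_minus (fun s' => F s' (b + h)) (fun s' => F s' b));
      [apply (Hd s (b + h)) | apply (Hd s b)]; lra. }
  destruct (MVT_cor2 (Fa xi) (Fab xi) b (b + h)) as [eta [E2 Heta]]; [lra | |].
  { intros t Ht. apply (Hd xi t); lra. }
  exists xi, eta. split; [lra | split; [lra |]].
  replace (F (a + h) (b + h) - F (a + h) b - (F a (b + h) - F a b))
    with ((F (a + h) (b + h) - F (a + h) b) - (F a (b + h) - F a b)) by ring.
  rewrite E1, E2. replace (a + h - a) with h by ring. replace (b + h - b) with h by ring. ring.
Qed.

Lemma schwarz_2d (F Fa Fb Fab Fba : R -> R -> R) a b r : 0 < r ->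
  (forall s t, Rabs (s - a) < r -> Rabs (t - b) < r ->
    derivable_pt_lim (fun s' => F s' t) s (Fa s t) /\
    derivable_pt_lim (fun t' => F s t') t (Fb s t) /\
    derivable_pt_lim (fun t' => Fa s t') t (Fab s t) /\
    derivable_pt_lim (fun s' => Fb s' t) s (Fba s t)) ->
  (forall eps, 0 < eps -> exists del, 0 < del /\ forall s t, Rabs (s - a) < del -> Rabs (t - b) < del ->
     Rabs (Fab s t - Fab a b) < eps /\ Rabs (Fba s t - Fba a b) < eps) ->
  Fab a b = Fba a b.
Proof.
  intros Hr Hd Hc.
  destruct (Req_dec (Fab a b - Fba a b) 0) as [| Hne]; [lra | exfalso].
  set (eps := Rabs (Fab a b - Fba a b) / 4).
  assert (He : 0 < eps) by (apply Rdiv_lt_0_compat; [apply Rabs_pos_lt; auto | lra]).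
  destruct (Hc eps He) as [del [Hdel Hcd]].
  set (h := Rmin del r / 2).
  assert (Hh : 0 < h) by (apply Rdiv_lt_0_compat; [apply Rmin_pos; auto | lra]).
  assert (Hhd : h < del) by (unfold h; pose proof (Rmin_l del r); lra).
  assert (Hhr : h < r) by (unfold h; pose proof (Rmin_r del r); lra).
  assert (Hin : forall c s, c <= s <= c + h -> Rabs (s - c) < r /\ Rabs (s - c) < del)
    by (intros; rewrite Rabs_right by lra; lra).
  destruct (mixed_difference_mvt F Fa Fab a b h Hh) as [xi [eta [Hxi [Heta E1]]]].
  { intros s t Hs Ht. destruct (Hin a s Hs), (Hin b t Ht). split; apply Hd; auto. }
  destruct (mixed_difference_mvt (fun t s => F s t) (fun t s => Fb s t) (fun t s => Fba s t) b a h Hh)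
    as [eta' [xi' [Heta' [Hxi' E2]]]].
  { intros t s Ht Hs. destruct (Hin a s Hs), (Hin b t Ht). split; apply Hd; auto. }
  simpl in E2.
  assert (E : Fab xi eta = Fba xi' eta').
  { apply Rmult_eq_reg_r with (h * h); [| nra].
    replace (Fab xi eta * (h * h)) with (Fab xi eta * h * h) by ring.
    replace (Fba xi' eta' * (h * h)) with (Fba xi' eta' * h * h) by ring.
    rewrite <- E1, <- E2. ring. }
  destruct (Hcd xi eta) as [A1 _]; [destruct (Hin a xi); lra | destruct (Hin b eta); lra |].
  destruct (Hcd xi' eta') as [_ A2]; [destruct (Hin a xi'); lra | destruct (Hin b eta'); lra |].
  rewrite E in A1.
  assert (Rabs (Fab a b - Fba a b) <= Rabs (Fba xi' eta' - Fab a b) + Rabs (Fba xi' eta' - Fba a b)).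
  { replace (Fab a b - Fba a b) with (- (Fba xi' eta' - Fab a b) + (Fba xi' eta' - Fba a b)) by ring.
    eapply Rle_trans; [apply Rabs_triang | rewrite Rabs_Ropp; lra]. }
  unfold eps in *. lra.
Qed.

Lemma upd_eq v i s : upd v i s i = s.
Proof. unfold upd. rewrite Nat.eqb_refl. auto. Qed.
Lemma upd_neq v i s k : k <> i -> upd v i s k = v k.
Proof. intros. unfold upd. destruct (Nat.eqb_spec k i); auto; lia. Qed.
Lemma upd_upd v i s s' : upd (upd v i s) i s' = upd v i s'.
Proof. apply functional_extensionality; intros k. unfold upd. destruct (Nat.eqb_spec k i); auto. Qed.
Lemma upd_comm v i j s t : i <> j -> upd (upd v i s) j t = upd (upd v j t) i s.
Proof.
  intros. apply functional_extensionality; intros k. unfold upd.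
  destruct (Nat.eqb_spec k i), (Nat.eqb_spec k j); auto; lia.
Qed.
Lemma upd_same v i : upd v i (v i) = v.
Proof. apply functional_extensionality; intros k. unfold upd. destruct (Nat.eqb_spec k i); subst; auto. Qed.

Definition zup (n : nat) (p : vec * vec) (i : nat) (s : R) : vec * vec := zupd n (fst p) (snd p) i s.
Definition zc (n : nat) (p : vec * vec) (i : nat) : R := zcoord n (fst p) (snd p) i.

Lemma zc_zup n p i s c : zc n (zup n p i s) c = if Nat.eqb c i then s else zc n p c.
Proof.
  unfold zc, zup, zupd, zcoord. destruct p as [x u]; simpl.
  destruct (Nat.ltb_spec i n), (Nat.ltb_spec c n); simpl; destruct (Nat.eqb_spec c i);
    try lia; subst; auto using upd_eq, upd_neq.
  apply upd_neq; lia.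
Qed.

Lemma zup_zup n p i s s' : zup n (zup n p i s) i s' = zup n p i s'.
Proof. destruct p as [x u]. unfold zup, zupd; simpl. destruct (Nat.ltb i n); simpl; rewrite upd_upd; auto. Qed.

Lemma zup_comm n p i j s t : i <> j -> zup n (zup n p i s) j t = zup n (zup n p j t) i s.
Proof.
  intros. destruct p as [x u]. unfold zup, zupd; simpl.
  destruct (Nat.ltb_spec i n), (Nat.ltb_spec j n); simpl; try rewrite upd_comm; auto; lia.
Qed.

Lemma zup_same n p i : zup n p i (zc n p i) = p.
Proof. destruct p as [x u]. unfold zup, zupd, zc, zcoord; simpl. destruct (Nat.ltb i n); rewrite upd_same; auto. Qed.

Lemma dist2_zc n m x u x' u' : dist2 n m x' u' x u =
  sqrt (sumR (n + m) (fun c => (zc n (x', u') c - zc n (x, u) c) * (zc n (x', u') c - zc n (x, u) c))).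
Proof.
  unfold dist2. f_equal. rewrite sumR_split. unfold dot, vsub, zc, zcoord; simpl. f_equal.
  - apply sumR_ext; intros. destruct (Nat.ltb_spec i n); auto; lia.
  - apply sumR_ext; intros. destruct (Nat.ltb_spec (n + i) n); try lia.
    replace (n + i - n)%nat with i by lia. auto.
Qed.

Definition zplane (n : nat) (p : vec * vec) (i j : nat) (s t : R) : vec * vec :=
  zup n (zup n p i s) j t.

Lemma dist2_zplane n m p i j s t : i <> j ->
  dist2 n m (fst (zplane n p i j s t)) (snd (zplane n p i j s t)) (fst p) (snd p)
  <= Rabs (s - zc n p i) + Rabs (t - zc n p j).
Proof.
  intros Hij. rewrite dist2_zc, <- !surjective_pairing.
  set (A := s - zc n p i). set (B := t - zc n p j).
  pose proof (Rabs_pos A). pose proof (Rabs_pos B).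
  rewrite <- (sqrt_Rsqr (Rabs A + Rabs B)) by lra. apply sqrt_le_1_alt.
  apply Rle_trans with (sumR (n + m) (fun c => (if Nat.eqb c i then A * A else 0)
                                             + (if Nat.eqb c j then B * B else 0))).
  - apply sumR_le; intros c _. unfold zplane. rewrite !zc_zup.
    destruct (Nat.eqb_spec c j), (Nat.eqb_spec c i); subst; try lia; unfold A, B; nra.
  - rewrite sumR_plus, !sumR_single. unfold Rsqr.
    assert (A * A = Rabs A * Rabs A) by (rewrite <- Rabs_mult; symmetry; apply Rabs_pos_eq; nra).
    assert (B * B = Rabs B * Rabs B) by (rewrite <- Rabs_mult; symmetry; apply Rabs_pos_eq; nra).
    destruct (Nat.ltb i (n + m)), (Nat.ltb j (n + m)); nra.
Qed.

Section Schwarz.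

Variables (n m : nat) (G : vec -> vec -> R) (DG : vec -> vec -> nat -> R)
  (D2G : vec -> vec -> nat -> nat -> R) (Dom : vec -> vec -> Prop).
Hypothesis HO : open2 n m Dom.
Hypothesis HG : forall x u, Dom x u -> forall i, (i < n + m)%nat ->
  has_partial2 n G x u i (DG x u i) /\
  forall j, (j < n + m)%nat ->
    has_partial2 n (fun x u => DG x u i) x u j (D2G x u i j) /\
    cont2 n m (fun x u => D2G x u i j) x u.

Lemma D2_symm x u i j : Dom x u -> (i < n + m)%nat -> (j < n + m)%nat -> D2G x u i j = D2G x u j i.
Proof.
  intros Hxu Hi Hj. destruct (Nat.eq_dec i j) as [| Hij]; [subst; auto |].
  set (p := (x, u)). set (a := zc n p i). set (b := zc n p j).
  set (P := zplane n p i j).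
  assert (HPi : forall s t s', zup n (P s t) i s' = P s' t)
    by (intros; unfold P, zplane; rewrite zup_comm, zup_zup by auto; auto).
  assert (HPj : forall s t t', zup n (P s t) j t' = P s t')
    by (intros; unfold P, zplane; rewrite zup_zup; auto).
  assert (Hci : forall s t, zc n (P s t) i = s).
  { intros. unfold P, zplane. rewrite !zc_zup. destruct (Nat.eqb_spec i j); try lia. rewrite Nat.eqb_refl. auto. }
  assert (Hcj : forall s t, zc n (P s t) j = t) by (intros; unfold P, zplane; rewrite zc_zup, Nat.eqb_refl; auto).
  assert (HPab : P a b = p) by (unfold P, zplane, a, b; rewrite !zup_same; auto).
  destruct (HO x u Hxu) as [r [Hr Hro]].
  assert (HOst : forall s t, Rabs (s - a) < r / 2 -> Rabs (t - b) < r / 2 -> Dom (fst (P s t)) (snd (P s t))).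
  { intros s t Hs Ht. apply Hro. pose proof (dist2_zplane n m p i j s t Hij) as Hd.
    change (fst p) with x in Hd. change (snd p) with u in Hd. fold a b in Hd. unfold P. lra. }
  assert (E1 : D2G x u i j = D2G (fst (P a b)) (snd (P a b)) i j) by (rewrite HPab; reflexivity).
  assert (E2 : D2G x u j i = D2G (fst (P a b)) (snd (P a b)) j i) by (rewrite HPab; reflexivity).
  rewrite E1, E2.
  apply (schwarz_2d (fun s t => G (fst (P s t)) (snd (P s t)))
           (fun s t => DG (fst (P s t)) (snd (P s t)) i) (fun s t => DG (fst (P s t)) (snd (P s t)) j)
           (fun s t => D2G (fst (P s t)) (snd (P s t)) i j)
           (fun s t => D2G (fst (P s t)) (snd (P s t)) j i) a b (r / 2)); [lra | |].
  - intros s t Hs Ht. pose proof (HOst s t Hs Ht) as Ho. set (q := P s t) in *.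
    destruct (HG (fst q) (snd q) Ho i Hi) as [D1 D1']. destruct (D1' j Hj) as [D3 _].
    destruct (HG (fst q) (snd q) Ho j Hj) as [D2 D2']. destruct (D2' i Hi) as [D4 _].
    unfold has_partial2 in D1, D2, D3, D4.
    change (zupd n (fst q) (snd q)) with (zup n q) in D1, D2, D3, D4.
    change (zcoord n (fst q) (snd q)) with (zc n q) in D1, D2, D3, D4.
    unfold q in D1, D2, D3, D4. rewrite Hci in D1, D4. rewrite Hcj in D2, D3.
    repeat split; eapply derivable_pt_lim_ext; try eassumption; intros z; cbv beta;
      rewrite ?HPi, ?HPj; reflexivity.
  - intros eps Heps.
    destruct (HG x u Hxu i Hi) as [_ C1]. destruct (C1 j Hj) as [_ C1'].
    destruct (HG x u Hxu j Hj) as [_ C2]. destruct (C2 i Hi) as [_ C2'].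
    destruct (C1' eps Heps) as [d1 [Hd1 Hc1]]. destruct (C2' eps Heps) as [d2 [Hd2 Hc2]].
    exists (Rmin d1 d2 / 2). split; [apply Rdiv_lt_0_compat; [apply Rmin_pos; auto | lra] |].
    intros s t Hs Ht. pose proof (dist2_zplane n m p i j s t Hij) as Hd.
    change (fst p) with x in Hd. change (snd p) with u in Hd. fold a b in Hd.
    pose proof (Rmin_l d1 d2). pose proof (Rmin_r d1 d2).
    cbv beta. rewrite HPab. split; [apply Hc1 | apply Hc2]; unfold P; lra.
Qed.

End Schwarz.

Lemma HessH_symm n m f Df D2f xs us ls :
  f_C2_near_traj n m f Df D2f xs us ->
  forall t, -1 <= t <= 1 -> symm (n + m) (HessH n D2f xs us ls t).
Proof.
  intros [Dom [HO [Hin Hf]]] t Ht i j Hi Hj.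
  unfold HessH. apply sumR_ext; intros k Hk. f_equal.
  apply (D2_symm n m (fun x u => f x u k) (Df k) (D2f k) Dom HO); auto.
  intros x' u' Ho i' Hi'. destruct (Hf x' u' Ho k Hk) as [_ H2].
  destruct (H2 i' Hi') as [A1 [_ A3]]. split; auto.
Qed.

Lemma dist2_0 n x u x' u' : dist2 n 0 x u x' u' = dist1 n x x'.
Proof. unfold dist2, dist1, enorm, dot at 2. simpl. rewrite Rplus_0_r. auto. Qed.

Lemma has_partial2_of_partial1 n (C : vec -> R) x u i dv : (i < n)%nat ->
  has_partial1 C x i dv -> has_partial2 n (fun x u => C x) x u i dv.
Proof.
  intros. unfold has_partial2, has_partial1, zupd, zcoord in *.
  destruct (Nat.ltb_spec i n); [auto | lia].
Qed.

(* A function of [x] alone is a function of [(x, u)] with [m = 0]. *)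
Lemma C2_hessian_symm n C DC D2C x0 : C_C2_near n C DC D2C x0 -> symm n (D2C x0).
Proof.
  intros [Dom [HO [Hx0 HC]]] i j Hi Hj.
  assert (HO2 : open2 n 0 (fun x _ => Dom x)).
  { intros x u Hxu. destruct (HO x Hxu) as [r [Hr Hro]]. exists r. split; auto.
    intros. apply Hro. rewrite <- (dist2_0 n x' u' x u). auto. }
  refine (D2_symm n 0 (fun x u => C x) (fun x u i => DC x i) (fun x u i j => D2C x i j)
            (fun x u => Dom x) HO2 _ x0 (fun _ => 0) i j Hx0 ltac:(lia) ltac:(lia)).
  intros x' u' Ho i' Hi'. destruct (HC x' Ho) as [_ H2]. destruct (H2 i' ltac:(lia)) as [A1 [_ A3]].
  split; [apply has_partial2_of_partial1; auto; lia |].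
  intros j' Hj'. destruct (A3 j' ltac:(lia)) as [B1 B2].
  split; [apply (has_partial2_of_partial1 n (fun x => DC x i')); auto; lia |].
  intros eps Heps. destruct (B2 eps Heps) as [del [Hd Hc]]. exists del. split; auto.
  intros. apply Hc. rewrite <- (dist2_0 n x'0 u'0 x' u'). auto.
Qed.

(* Trajectories are only continuous on [-1,1]; composing with this retraction
   gives functions continuous on all of R, to which [continuity_ab_maj] applies. *)
Definition clamp (t : R) : R := Rmax (-1) (Rmin t 1).

Lemma clamp_in t : -1 <= clamp t <= 1.
Proof. unfold clamp. split; [apply Rmax_l | apply Rmax_lub; [lra | apply Rmin_r]]. Qed.

Lemma clamp_id t : -1 <= t <= 1 -> clamp t = t.
Proof. intros. unfold clamp. rewrite Rmin_left by lra. rewrite Rmax_right; lra. Qed.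

Lemma clamp_lip t c : Rabs (clamp t - clamp c) <= Rabs (t - c).
Proof.
  unfold clamp, Rmax, Rmin.
  destruct (Rle_dec t 1), (Rle_dec c 1), (Rle_dec (-1) t), (Rle_dec (-1) c), (Rle_dec (-1) 1);
    try lra;
  repeat match goal with |- context [Rabs ?x] => destruct (Rcase_abs x);
    [rewrite (Rabs_left x) by lra | rewrite (Rabs_right x) by lra] end; lra.
Qed.

Lemma cont_traj_clamp_coord d g k c : cont_traj d g -> (k < d)%nat ->
  continuity_pt (fun t => g (clamp t) k) c.
Proof.
  intros Hg Hk eps Heps. destruct (Hg (clamp c) (clamp_in c) eps Heps) as [del [Hd Hc]].
  exists del. split; [lra |]. intros t [_ Ht]. simpl in *. unfold R_dist in *.
  eapply Rle_lt_trans; [apply (enorm_ge_coord d (vsub (g (clamp t)) (g (clamp c))) k Hk) |].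
  apply Hc; [apply clamp_in | eapply Rle_lt_trans; [apply clamp_lip | auto]].
Qed.

Lemma continuity_pt_sumR k (F : nat -> R -> R) c :
  (forall j, (j < k)%nat -> continuity_pt (F j) c) ->
  continuity_pt (fun t => sumR k (fun j => F j t)) c.
Proof.
  induction k; intros; simpl; [apply continuity_pt_const; intros x y; auto |].
  apply (continuity_pt_plus (fun t => sumR k (fun j => F j t)) (F k));
    [apply IHk; intros; apply H; lia | apply H; lia].
Qed.

Lemma continuous_bounded_on_unit_interval (h : R -> R) : (forall c, continuity_pt h c) ->
  exists K, forall t, -1 <= t <= 1 -> Rabs (h t) <= K.
Proof.
  intros H.
  destruct (continuity_ab_maj h (-1) 1) as [M1 [H1 _]]; [lra | auto |].
  destruct (continuity_ab_maj (fun t => - h t) (-1) 1) as [M2 [H2 _]];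
    [lra | intros; apply (continuity_pt_opp h); auto |].
  exists (Rmax (h M1) (- h M2)). intros t Ht. specialize (H1 t Ht). specialize (H2 t Ht).
  pose proof (Rmax_l (h M1) (- h M2)). pose proof (Rmax_r (h M1) (- h M2)).
  unfold Rabs. destruct (Rcase_abs (h t)); lra.
Qed.

Lemma finite_uniform_bound d (P : nat -> R -> Prop) :
  (forall i K K', P i K -> K <= K' -> P i K') ->
  (forall i, (i < d)%nat -> exists K, P i K) -> exists K, 0 <= K /\ forall i, (i < d)%nat -> P i K.
Proof.
  intros Hmono. induction d; intros H; [exists 0; split; [lra | intros; lia] |].
  destruct IHd as [K1 [HK1 H1]]; [intros; apply H; lia |].
  destruct (H d ltac:(lia)) as [K2 H2].
  exists (Rmax K1 K2). split; [eapply Rle_trans; [apply HK1 | apply Rmax_l] |].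
  intros i Hi. destruct (Nat.eq_dec i d).
  - subst. apply (Hmono d K2); auto. apply Rmax_r.
  - apply (Hmono i K1); [apply H1; lia | apply Rmax_l].
Qed.

Lemma entries_uniformly_bounded d1 d2 (P : nat -> nat -> R -> Prop) :
  (forall i j K K', P i j K -> K <= K' -> P i j K') ->
  (forall i j, (i < d1)%nat -> (j < d2)%nat -> exists K, P i j K) ->
  exists K, 0 <= K /\ forall i j, (i < d1)%nat -> (j < d2)%nat -> P i j K.
Proof.
  intros Hmono H.
  destruct (finite_uniform_bound d1 (fun i K => forall j, (j < d2)%nat -> P i j K)) as [K [HK0 HK]].
  - intros. eapply Hmono; eauto.
  - intros i Hi. destruct (finite_uniform_bound d2 (P i)) as [K [_ HK]]; eauto.
  - exists K. split; auto.
Qed.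

Lemma mat_entries_bounded d (M : mat) :
  exists K, 0 <= K /\ forall i j, (i < d)%nat -> (j < d)%nat -> Rabs (M i j) <= K.
Proof.
  apply (entries_uniformly_bounded d d (fun i j K => Rabs (M i j) <= K)); [intros; lra |].
  intros i j _ _. exists (Rabs (M i j)). lra.
Qed.

Lemma dist2_le n m x u x' u' : dist2 n m x u x' u' <= dist1 n x x' + dist1 m u u'.
Proof.
  unfold dist2, dist1, enorm.
  pose proof (dot_sq_nonneg n (vsub x x')) as Ha. pose proof (dot_sq_nonneg m (vsub u u')) as Hb.
  set (a := dot n (vsub x x') (vsub x x')) in *. set (b := dot m (vsub u u') (vsub u u')) in *.
  rewrite <- (sqrt_Rsqr (sqrt a + sqrt b)) by (pose proof (sqrt_pos a); pose proof (sqrt_pos b); lra).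
  apply sqrt_le_1_alt. unfold Rsqr.
  pose proof (sqrt_sqrt a Ha). pose proof (sqrt_sqrt b Hb). pose proof (sqrt_pos a). pose proof (sqrt_pos b).
  nra.
Qed.

Lemma HessH_entry_continuous n m f Df D2f xs us ls i j c :
  cont_traj n xs -> cont_traj m us -> cont_traj n ls ->
  f_C2_near_traj n m f Df D2f xs us -> (i < n + m)%nat -> (j < n + m)%nat ->
  continuity_pt (fun t => HessH n D2f xs us ls (clamp t) i j) c.
Proof.
  intros Hx Hu Hl [Dom [HO [Hin Hf]]] Hi Hj.
  unfold HessH. apply continuity_pt_sumR. intros k Hk.
  apply (continuity_pt_mult (fun t => ls (clamp t) k) (fun t => D2f k (xs (clamp t)) (us (clamp t)) i j));
    [apply (cont_traj_clamp_coord n); auto |].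
  intros eps Heps. set (cc := clamp c).
  destruct (Hf (xs cc) (us cc) (Hin cc (clamp_in c)) k Hk) as [_ H2].
  destruct (H2 i Hi) as [_ [_ H3]]. destruct (H3 j Hj) as [_ Hcont].
  destruct (Hcont eps Heps) as [del [Hd Hc]].
  destruct (Hx cc (clamp_in c) (del / 2) ltac:(lra)) as [d1 [Hd1 Hc1]].
  destruct (Hu cc (clamp_in c) (del / 2) ltac:(lra)) as [d2 [Hd2 Hc2]].
  exists (Rmin d1 d2). split; [apply Rmin_pos; auto |]. intros t [_ Ht]. simpl in *. unfold R_dist in *.
  pose proof (clamp_lip t c). pose proof (Rmin_l d1 d2). pose proof (Rmin_r d1 d2).
  apply Hc. eapply Rle_lt_trans; [apply dist2_le |].
  assert (dist1 n (xs (clamp t)) (xs cc) < del / 2) by (apply Hc1; [apply clamp_in | unfold cc; lra]).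
  assert (dist1 m (us (clamp t)) (us cc) < del / 2) by (apply Hc2; [apply clamp_in | unfold cc; lra]).
  lra.
Qed.

Lemma HessH_bounded n m f Df D2f xs us ls :
  cont_traj n xs -> cont_traj m us -> cont_traj n ls ->
  f_C2_near_traj n m f Df D2f xs us ->
  exists K, 0 <= K /\ forall i j, (i < n + m)%nat -> (j < n + m)%nat ->
    forall t, -1 <= t <= 1 -> Rabs (HessH n D2f xs us ls t i j) <= K.
Proof.
  intros Hx Hu Hl Hf.
  apply (entries_uniformly_bounded (n + m) (n + m)
           (fun i j K => forall t, -1 <= t <= 1 -> Rabs (HessH n D2f xs us ls t i j) <= K)).
  - intros. eapply Rle_trans; [apply H |]; auto.
  - intros i j Hi Hj.
    destruct (continuous_bounded_on_unit_interval (fun t => HessH n D2f xs us ls (clamp t) i j))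
      as [K HK]; [intros; apply (HessH_entry_continuous n m f Df); auto |].
    exists K. intros t Ht. specialize (HK t Ht). rewrite clamp_id in HK; auto.
Qed.

Lemma Un_cv_const c : Un_cv (fun _ => c) c.
Proof. intros eps Heps. exists O. intros. unfold Rdist. rewrite Rminus_diag, Rabs_R0. lra. Qed.

Lemma Un_cv_sumR k (F : nat -> nat -> R) (G : nat -> R) :
  (forall j, (j < k)%nat -> Un_cv (fun p => F p j) (G j)) ->
  Un_cv (fun p => sumR k (F p)) (sumR k G).
Proof.
  induction k; intros; simpl; [apply Un_cv_const |].
  apply (CV_plus (fun p => sumR k (F p)) (fun p => F p k)); [apply IHk; intros |]; apply H; lia.
Qed.

(* The collocation equations [sum_j D_ij W_j = A_i W_i + r_i], [W_0 = 0], rewritten as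
   the fixed-point problem [W = D_{1:N}^{-1} (A W + r)], a 1/2-contraction in the
   sup norm. *)
Section CollocationSystem.

Variables (N n : nat) (Dinv : mat) (A : nat -> mat) (r : nat -> vec).
Hypothesis HDinv : forall i, (1 <= i <= N)%nat -> sum1 N (fun j => Rabs (Dinv i j)) <= 2.
Hypothesis HA : forall j k, (1 <= j <= N)%nat -> (k < n)%nat -> sumR n (fun l => Rabs (A j k l)) <= / 4.

Definition in_block (i k : nat) : bool := Nat.leb 1 i && Nat.leb i N && Nat.ltb k n.

Lemma in_block_true i k : in_block i k = true <-> (1 <= i <= N /\ k < n)%nat.
Proof. unfold in_block. rewrite !andb_true_iff, Nat.leb_le, Nat.leb_le, Nat.ltb_lt. tauto. Qed.

Definition colloc_map (W : nat -> vec) : nat -> vec :=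
  fun i k => if in_block i k then sum1 N (fun j => Dinv i j * (mv n (A j) (W j) k + r j k)) else 0.

Definition sup_dist (W W' : nat -> vec) : R :=
  maxR (S N) (fun i => maxR n (fun k => Rabs (W i k - W' i k))).

Lemma sup_dist_ge W W' i k : (i <= N)%nat -> (k < n)%nat -> Rabs (W i k - W' i k) <= sup_dist W W'.
Proof.
  intros. eapply Rle_trans; [| apply (maxR_ge (S N) _ i); lia].
  apply (maxR_ge n (fun k => Rabs (W i k - W' i k))); auto.
Qed.

Lemma sup_dist_le W W' b : 0 <= b ->
  (forall i k, (i <= N)%nat -> (k < n)%nat -> Rabs (W i k - W' i k) <= b) -> sup_dist W W' <= b.
Proof. intros. apply maxR_le; auto. intros. apply maxR_le; auto. intros. apply H0; lia. Qed.

Lemma sup_dist_nonneg W W' : 0 <= sup_dist W W'.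
Proof. apply maxR_nonneg. Qed.

Lemma colloc_map_contraction W W' :
  sup_dist (colloc_map W) (colloc_map W') <= / 2 * sup_dist W W'.
Proof.
  pose proof (sup_dist_nonneg W W'). apply sup_dist_le; [lra |]. intros i k Hi Hk.
  unfold colloc_map. destruct (in_block i k) eqn:E; [| rewrite Rminus_0_r, Rabs_R0; lra].
  apply in_block_true in E. unfold sum1. rewrite sumR_minus.
  rewrite (sumR_ext N _ (fun j => Dinv i (S j) * sumR n (fun l => A (S j) k l * (W (S j) l - W' (S j) l)))).
  2:{ intros j _. unfold mv. rewrite <- Rmult_minus_distr_l. f_equal.
      replace (sumR n (fun l => A (S j) k l * W (S j) l) + r (S j) k
               - (sumR n (fun l => A (S j) k l * W' (S j) l) + r (S j) k))
        with (sumR n (fun l => A (S j) k l * W (S j) l) - sumR n (fun l => A (S j) k l * W' (S j) l))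
        by ring.
      rewrite sumR_minus. apply sumR_ext; intros; ring. }
  replace (/ 2 * sup_dist W W') with (2 * (/ 4 * sup_dist W W')) by field.
  apply rowsum_bound; [nra | apply HDinv; lia |].
  intros. apply rowsum_bound; auto; [apply HA; lia |]. intros. apply sup_dist_ge; lia.
Qed.

Definition colloc_iter (p : nat) : nat -> vec := Nat.iter p colloc_map (fun _ _ => 0).

Lemma colloc_iter_out p i k : in_block i k = false -> colloc_iter p i k = 0.
Proof. intros. destruct p; simpl; auto. unfold colloc_map. rewrite H. auto. Qed.

Lemma colloc_iter_step p :
  sup_dist (colloc_iter (S p)) (colloc_iter p) <= (/ 2) ^ p * sup_dist (colloc_iter 1) (colloc_iter 0).
Proof.
  induction p; [simpl; lra |].
  change (colloc_iter (S (S p))) with (colloc_map (colloc_iter (S p))).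
  change (colloc_iter (S p)) with (colloc_map (colloc_iter p)) at 2.
  eapply Rle_trans; [apply colloc_map_contraction |]. change ((/ 2) ^ S p) with (/ 2 * (/ 2) ^ p). lra.
Qed.

Lemma colloc_iter_tail p q i k :
  Rabs (colloc_iter (p + q) i k - colloc_iter p i k) <=
    2 * (/ 2) ^ p * sup_dist (colloc_iter 1) (colloc_iter 0) * (1 - (/ 2) ^ q).
Proof.
  set (d0 := sup_dist (colloc_iter 1) (colloc_iter 0)).
  assert (Hd0 : 0 <= d0) by apply sup_dist_nonneg.
  assert (Hp : 0 <= (/ 2) ^ p) by (apply pow_le; lra).
  destruct (in_block i k) eqn:E.
  2:{ rewrite !colloc_iter_out, Rminus_0_r, Rabs_R0 by auto.
      assert ((/ 2) ^ q <= 1) by (clear; induction q; simpl; lra). apply Rmult_le_pos; [nra | lra]. }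
  apply in_block_true in E.
  induction q; [rewrite Nat.add_0_r; simpl; rewrite Rminus_diag, Rabs_R0; lra |].
  replace (p + S q)%nat with (S (p + q)) by lia.
  pose proof (Rle_trans _ _ _ (sup_dist_ge (colloc_iter (S (p + q))) (colloc_iter (p + q)) i k
                                 ltac:(lia) ltac:(lia)) (colloc_iter_step (p + q))) as H2.
  fold d0 in H2. rewrite pow_add in H2.
  replace (colloc_iter (S (p + q)) i k - colloc_iter p i k) with
    ((colloc_iter (S (p + q)) i k - colloc_iter (p + q) i k) + (colloc_iter (p + q) i k - colloc_iter p i k))
    by ring.
  eapply Rle_trans; [apply Rabs_triang |]. simpl pow.
  assert (0 <= (/ 2) ^ q) by (apply pow_le; lra). nra.
Qed.

Lemma colloc_iter_cauchy i k : Cauchy_crit (fun p => colloc_iter p i k).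
Proof.
  intros eps Heps.
  set (d0 := sup_dist (colloc_iter 1) (colloc_iter 0)).
  assert (Hd0 : 0 <= d0) by apply sup_dist_nonneg.
  destruct (pow_lt_1_zero (/ 2) ltac:(rewrite Rabs_right; lra) (eps / (4 * d0 + 1))
              ltac:(apply Rdiv_lt_0_compat; lra)) as [P HP].
  exists P. intros p q Hp Hq. unfold Rdist.
  pose proof (colloc_iter_tail P (p - P) i k) as B1.
  pose proof (colloc_iter_tail P (q - P) i k) as B2.
  replace (P + (p - P))%nat with p in B1 by lia. replace (P + (q - P))%nat with q in B2 by lia.
  fold d0 in B1, B2. specialize (HP P (le_n P)). rewrite Rabs_right in HP by (apply Rle_ge, pow_le; lra).
  assert (0 <= (/ 2) ^ (p - P)) by (apply pow_le; lra).
  assert (0 <= (/ 2) ^ (q - P)) by (apply pow_le; lra).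
  assert (0 <= (/ 2) ^ P) by (apply pow_le; lra).
  replace (colloc_iter p i k - colloc_iter q i k) with
    ((colloc_iter p i k - colloc_iter P i k) - (colloc_iter q i k - colloc_iter P i k)) by ring.
  eapply Rle_lt_trans; [apply Rabs_triang | rewrite Rabs_Ropp].
  assert (4 * (/ 2) ^ P * d0 < eps).
  { apply Rmult_lt_compat_r with (r := 4 * d0 + 1) in HP; [| lra].
    replace (eps / (4 * d0 + 1) * (4 * d0 + 1)) with eps in HP by (field; lra). nra. }
  assert (0 <= 2 * (/ 2) ^ P * d0) by (apply Rmult_le_pos; lra).
  nra.
Qed.

Definition colloc_sol : nat -> vec := fun i k => proj1_sig (R_complete _ (colloc_iter_cauchy i k)).

Lemma colloc_sol_limit i k : Un_cv (fun p => colloc_iter p i k) (colloc_sol i k).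
Proof. unfold colloc_sol. destruct (R_complete _ (colloc_iter_cauchy i k)). auto. Qed.

Lemma colloc_sol_fixed i k : colloc_sol i k = colloc_map colloc_sol i k.
Proof.
  apply (UL_sequence (fun p => colloc_iter (S p) i k)).
  { intros eps Heps. destruct (colloc_sol_limit i k eps Heps) as [P HP]. exists P. intros. apply HP. lia. }
  change (fun p => colloc_iter (S p) i k) with (fun p => colloc_map (colloc_iter p) i k).
  unfold colloc_map. destruct (in_block i k); [| apply Un_cv_const].
  apply (Un_cv_sumR N (fun p j => Dinv i (S j) * (mv n (A (S j)) (colloc_iter p (S j)) k + r (S j) k))).
  intros. apply CV_mult; [apply Un_cv_const |]. apply CV_plus; [| apply Un_cv_const].
  apply (Un_cv_sumR n (fun p l => A (S j) k l * colloc_iter p (S j) l)). intros.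
  apply CV_mult; [apply Un_cv_const | apply colloc_sol_limit].
Qed.

Lemma colloc_sol_bound b : 0 <= b ->
  (forall i k, (1 <= i <= N)%nat -> (k < n)%nat -> Rabs (r i k) <= b) ->
  forall i k, (i <= N)%nat -> (k < n)%nat -> Rabs (colloc_sol i k) <= 4 * b.
Proof.
  intros Hb Hr.
  set (M := sup_dist colloc_sol (fun _ _ => 0)).
  assert (HM0 : 0 <= M) by apply sup_dist_nonneg.
  assert (Hcoord : forall i k, (i <= N)%nat -> (k < n)%nat -> Rabs (colloc_sol i k) <= M).
  { intros. pose proof (sup_dist_ge colloc_sol (fun _ _ => 0) i k H H0). rewrite Rminus_0_r in H1. auto. }
  assert (HM : M <= / 2 * M + 2 * b).
  { apply sup_dist_le; [lra |]. intros i k Hi Hk. rewrite Rminus_0_r, colloc_sol_fixed.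
    unfold colloc_map. destruct (in_block i k) eqn:E; [| rewrite Rabs_R0; lra].
    apply in_block_true in E.
    replace (/ 2 * M + 2 * b) with (2 * (/ 4 * M + b)) by field.
    apply rowsum_bound; [lra | apply HDinv; lia |]. intros.
    eapply Rle_trans; [apply Rabs_triang | apply Rplus_le_compat].
    - apply rowsum_bound; [lra | apply HA; lia | intros; apply Hcoord; lia].
    - apply Hr; lia. }
  intros. pose proof (Hcoord i k H H0). lra.
Qed.

End CollocationSystem.

Lemma collocation_system_solvable N n (D Dinv : mat) (A : nat -> mat) (r : nat -> vec) b :
  (forall i j, (1 <= i <= N)%nat -> (1 <= j <= N)%nat ->
     sum1 N (fun k => D i k * Dinv k j) = if Nat.eqb i j then 1 else 0) ->
  (forall i, (1 <= i <= N)%nat -> sum1 N (fun j => Rabs (Dinv i j)) <= 2) ->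
  (forall j k, (1 <= j <= N)%nat -> (k < n)%nat -> sumR n (fun l => Rabs (A j k l)) <= / 4) ->
  0 <= b -> (forall i k, (1 <= i <= N)%nat -> (k < n)%nat -> Rabs (r i k) <= b) ->
  exists W : nat -> vec,
    (forall i k, (1 <= i <= N)%nat -> (k < n)%nat ->
       sum1 N (fun j => D i j * W j k) = mv n (A i) (W i) k + r i k) /\
    (forall i k, (i <= N)%nat -> (k < n)%nat -> Rabs (W i k) <= 4 * b).
Proof.
  intros HDD HD HA Hb Hr.
  set (W := colloc_sol N n Dinv A r HD HA).
  exists W. split; [| apply colloc_sol_bound; auto].
  intros i k Hi Hk.
  set (g := fun p => mv n (A p) (W p) k + r p k).
  assert (HW : forall j, (1 <= j <= N)%nat -> W j k = sum1 N (fun p => Dinv j p * g p)).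
  { intros j Hj. unfold W at 1. rewrite colloc_sol_fixed. unfold colloc_map.
    destruct (in_block N n j k) eqn:E; [reflexivity |].
    assert (in_block N n j k = true) by (apply in_block_true; auto). congruence. }
  rewrite (sum1_ext N _ (fun j => sum1 N (fun p => D i j * Dinv j p * g p))).
  2:{ intros j Hj. rewrite HW, <- sum1_scal by auto. apply sum1_ext; intros; ring. }
  unfold sum1. rewrite sumR_swap.
  rewrite (sumR_ext N _ (fun p => if Nat.eqb p (i - 1) then g i else 0)).
  - rewrite sumR_single. destruct (Nat.ltb_spec (i - 1) N); [reflexivity | lia].
  - intros p Hp.
    rewrite (sumR_ext N _ (fun j => g (S p) * (D i (S j) * Dinv (S j) (S p)))) by (intros; ring).
    rewrite sumR_scal. change (sumR N (fun j => D i (S j) * Dinv (S j) (S p)))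
      with (sum1 N (fun j => D i j * Dinv j (S p))).
    rewrite HDD by lia.
    destruct (Nat.eqb_spec i (S p)), (Nat.eqb_spec p (i - 1)); try lia; [subst i; ring | ring].
Qed.

Lemma young_abs e c x : 0 < e -> 0 <= c -> c * Rabs x <= e * (x * x) + c * c / (4 * e).
Proof.
  intros He Hc. pose proof (Rabs_pos x).
  replace (x * x) with (Rabs x * Rabs x) by (rewrite <- Rabs_mult; apply Rabs_pos_eq; nra).
  set (y := Rabs x) in *. pose proof (Rle_0_sqr (2 * e * y - c)). unfold Rsqr in *.
  apply Rmult_le_reg_r with (4 * e); [lra |].
  replace ((e * (y * y) + c * c / (4 * e)) * (4 * e)) with (4 * e * e * y * y + c * c) by (field; lra).
  nra.
Qed.

Lemma sumR_young d (g : nat -> R) (b : vec) c e : 0 < e -> 0 <= c ->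
  (forall l, (l < d)%nat -> Rabs (g l) <= c * Rabs (b l)) ->
  Rabs (sumR d g) <= e * dot d b b + INR d * (c * c) / (4 * e).
Proof.
  intros He Hc Hg. eapply Rle_trans; [apply sumR_abs |].
  apply Rle_trans with (sumR d (fun l => e * (b l * b l) + c * c / (4 * e))).
  - apply sumR_le; intros. eapply Rle_trans; [apply Hg; auto | apply young_abs; auto].
  - rewrite sumR_plus, sumR_scal, sumR_const. unfold dot, Rdiv. lra.
Qed.

Lemma sumR_abs_prod_le d (a f : vec) Ma K : 0 <= Ma ->
  (forall k, (k < d)%nat -> Rabs (a k) <= Ma) -> (forall k, (k < d)%nat -> Rabs (f k) <= K) ->
  Rabs (sumR d (fun k => a k * f k)) <= INR d * K * Ma.
Proof.
  intros HMa Ha Hf. eapply Rle_trans; [apply sumR_abs |].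
  apply Rle_trans with (sumR d (fun _ => K * Ma)); [| rewrite sumR_const; lra].
  apply sumR_le; intros. rewrite Rabs_mult, Rmult_comm.
  apply Rmult_le_compat; auto using Rabs_pos.
Qed.

Definition young_const (d1 d2 : nat) (K Ma e : R) : R :=
  INR d2 * ((INR d1 * K * Ma) * (INR d1 * K * Ma)) / (4 * e).

Lemma qform_young_l d1 d2 M a b K Ma Y e : 0 < e -> 0 <= K -> 0 <= Ma -> 0 <= Y ->
  (forall k, (k < d1)%nat -> Rabs (a k) <= Ma * Y) ->
  (forall k l, (k < d1)%nat -> (l < d2)%nat -> Rabs (M k l) <= K) ->
  Rabs (qform d1 d2 M a b) <= e * dot d2 b b + young_const d1 d2 K Ma e * (Y * Y).
Proof.
  intros He HK HMa HY Ha HM. unfold qform. rewrite sumR_swap.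
  pose proof (pos_INR d1).
  eapply Rle_trans; [apply (sumR_young d2 _ b (INR d1 * K * (Ma * Y)) e) |].
  - exact He.
  - apply Rmult_le_pos; [apply Rmult_le_pos |]; auto; nra.
  - intros l Hl. rewrite (sumR_ext d1 _ (fun k => b l * (a k * M k l))), sumR_scal by (intros; ring).
    rewrite Rabs_mult, Rmult_comm. apply Rmult_le_compat_r; [apply Rabs_pos |].
    apply sumR_abs_prod_le; auto; nra.
  - unfold young_const. right. field. lra.
Qed.

Lemma qform_young_r d1 d2 M a b K Ma Y e : 0 < e -> 0 <= K -> 0 <= Ma -> 0 <= Y ->
  (forall l, (l < d2)%nat -> Rabs (a l) <= Ma * Y) ->
  (forall k l, (k < d1)%nat -> (l < d2)%nat -> Rabs (M k l) <= K) ->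
  Rabs (qform d1 d2 M b a) <= e * dot d1 b b + young_const d2 d1 K Ma e * (Y * Y).
Proof.
  intros He HK HMa HY Ha HM. unfold qform.
  pose proof (pos_INR d2).
  eapply Rle_trans; [apply (sumR_young d1 _ b (INR d2 * K * (Ma * Y)) e) |].
  - exact He.
  - apply Rmult_le_pos; [apply Rmult_le_pos |]; auto; nra.
  - intros k Hk. rewrite (sumR_ext d2 _ (fun l => b k * (a l * M k l))), sumR_scal by (intros; ring).
    rewrite Rabs_mult, Rmult_comm. apply Rmult_le_compat_r; [apply Rabs_pos |].
    apply sumR_abs_prod_le; auto; nra.
  - unfold young_const. right. field. lra.
Qed.

Lemma dot_young d a b Y e : 0 < e -> 0 <= Y ->
  (forall k, (k < d)%nat -> Rabs (a k) <= Y) ->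
  Rabs (dot d a b) <= e * dot d b b + INR d / (4 * e) * (Y * Y).
Proof.
  intros. eapply Rle_trans; [apply (sumR_young d _ b Y e) |]; auto.
  - intros. rewrite Rabs_mult. apply Rmult_le_compat_r; [apply Rabs_pos | auto].
  - right. field. lra.
Qed.

Definition catv (n : nat) (a b : vec) : vec := fun k => if Nat.ltb k n then a k else b (k - n)%nat.

Lemma catv_l n a b k : (k < n)%nat -> catv n a b k = a k.
Proof. intros. unfold catv. destruct (Nat.ltb_spec k n); auto; lia. Qed.
Lemma catv_r n a b k : catv n a b (n + k)%nat = b k.
Proof. unfold catv. destruct (Nat.ltb_spec (n + k) n); try lia. f_equal; lia. Qed.

Lemma dot_catv n m a b : dot (n + m) (catv n a b) (catv n a b) = dot n a a + dot m b b.
Proof.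
  unfold dot. rewrite sumR_split. f_equal.
  - apply sumR_ext; intros; rewrite catv_l; auto.
  - apply sumR_ext; intros; rewrite catv_r; auto.
Qed.

Lemma qform_catv n m (H : mat) a b : symm (n + m) H ->
  qform (n + m) (n + m) H (catv n a b) (catv n a b) =
  qform n n (fun i j => H i j) a a + 2 * qform n m (fun i j => H i (n + j)%nat) a b
  + qform m m (fun i j => H (n + i)%nat (n + j)%nat) b b.
Proof.
  intros Hs. unfold qform. rewrite sumR_split.
  rewrite (sumR_ext n (fun k => sumR (n + m) (fun l => catv n a b k * H k l * catv n a b l))
    (fun k => sumR n (fun l => a k * H k l * a l) + sumR m (fun l => a k * H k (n + l)%nat * b l))).
  2:{ intros. cbv beta. rewrite sumR_split, !catv_l by auto. f_equal.
      - apply sumR_ext; intros; rewrite catv_l; auto.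
      - apply sumR_ext; intros; rewrite catv_r; auto. }
  rewrite (sumR_ext m (fun k => sumR (n + m) (fun l => catv n a b (n + k)%nat * H (n + k)%nat l * catv n a b l))
    (fun k => sumR n (fun l => a l * H l (n + k)%nat * b k) + sumR m (fun l => b k * H (n + k)%nat (n + l)%nat * b l))).
  2:{ intros. cbv beta. rewrite sumR_split, !catv_r. f_equal.
      - apply sumR_ext; intros. rewrite catv_l, (Hs (n + i)%nat i0) by lia. ring.
      - apply sumR_ext; intros; rewrite catv_r; auto. }
  rewrite !sumR_plus, (sumR_swap m n). ring.
Qed.

Lemma QP_cost_shift n m N w T Q Sm Rm y3 y4 y5 y6 (Xb Z U : nat -> vec) :
  (forall k, (k < n)%nat -> Z O k = 0) ->
  QP_cost n m N w T Q Sm Rm y3 y4 y5 y6 (fun j k => Xb j k + Z j k) U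
  - QP_cost n m N w T Q Sm Rm y3 y4 y5 y6 Xb (fun _ _ => 0) =
  / 2 * ((qform n n T (Z N) (Z N) + sum1 N (fun i => w i * (qform n n (Q i) (Z i) (Z i)
            + 2 * qform n m (Sm i) (Z i) (U i) + qform m m (Rm i) (U i) (U i))))
        + (qform n n T (Xb N) (Z N) + qform n n T (Z N) (Xb N)
           + sum1 N (fun i => w i * (qform n n (Q i) (Xb i) (Z i) + qform n n (Q i) (Z i) (Xb i)
                                     + 2 * qform n m (Sm i) (Xb i) (U i)))))
  - sum1 N (fun i => w i * (dot n (y4ext N y4 y5 i) (Z i) + dot m (y6 i) (U i))).
Proof.
  intros HZ0. unfold QP_cost.
  rewrite (qform_plusl n n T (Xb N) (Z N)), !qform_plusr.
  rewrite (dot_plusl n (Xb O) (Z O)), (dot_zero_l n (Z O)) by auto.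
  rewrite (sum1_ext N (fun i => w i * (qform n n (Q i) (fun k => Xb i k + Z i k) (fun k => Xb i k + Z i k) +
      2 * qform n m (Sm i) (fun k => Xb i k + Z i k) (U i) + qform m m (Rm i) (U i) (U i)))
    (fun i => w i * (qform n n (Q i) (Xb i) (Xb i) + 2 * qform n m (Sm i) (Xb i) (fun _ => 0)
                     + qform m m (Rm i) (fun _ => 0) (fun _ => 0))
      + (w i * (qform n n (Q i) (Z i) (Z i) + 2 * qform n m (Sm i) (Z i) (U i) + qform m m (Rm i) (U i) (U i))
      + w i * (qform n n (Q i) (Xb i) (Z i) + qform n n (Q i) (Z i) (Xb i) + 2 * qform n m (Sm i) (Xb i) (U i))))).
  2:{ intros. rewrite (qform_plusl n n (Q i) (Xb i) (Z i)), !qform_plusr.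
      rewrite (qform_plusl n m (Sm i) (Xb i) (Z i)), !qform_zero_r. ring. }
  rewrite (sum1_ext N (fun i => w i * (dot n (y4ext N y4 y5 i) (fun k => Xb i k + Z i k) + dot m (y6 i) (U i)))
    (fun i => w i * (dot n (y4ext N y4 y5 i) (Xb i) + dot m (y6 i) (fun _ => 0))
              + w i * (dot n (y4ext N y4 y5 i) (Z i) + dot m (y6 i) (U i)))).
  2:{ intros. rewrite (dot_plusr n (y4ext N y4 y5 i) (Xb i) (Z i)), dot_zero_r. ring. }
  rewrite !sum1_plus. ring.
Qed.

Definition cross_const (n m : nat) (KH e : R) : R :=
  young_const n n KH 9 e + young_const n m KH 9 e + INR n / (4 * e) + INR m / (4 * e).
Definition energy_const (n m : nat) (alpha KT KH : R) : R :=
  2 * young_const n n KT 9 (alpha / 8) + 4 * cross_const n m KH (alpha / 8).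
Definition QP_bound_const (n m : nat) (alpha KT KH : R) : R :=
  sqrt (486 * INR n + 4 * energy_const n m alpha KT KH / alpha + 1).

Lemma young_const_nonneg d1 d2 K Ma e : 0 < e -> 0 <= young_const d1 d2 K Ma e.
Proof.
  intros. unfold young_const. pose proof (pos_INR d2).
  apply Rmult_le_pos; [apply Rmult_le_pos; [lra | nra] | left; apply Rinv_0_lt_compat; lra].
Qed.

Lemma cross_const_nonneg n m KH e : 0 < e -> 0 <= cross_const n m KH e.
Proof.
  intros. unfold cross_const. pose proof (pos_INR n). pose proof (pos_INR m).
  pose proof (young_const_nonneg n n KH 9 e H). pose proof (young_const_nonneg n m KH 9 e H).
  assert (0 <= / (4 * e)) by (left; apply Rinv_0_lt_compat; lra).
  unfold Rdiv. nra.
Qed.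

Lemma Ropp_le_Rabs x : - x <= Rabs x.
Proof. rewrite <- Rabs_Ropp. apply RRle_abs. Qed.

Lemma node_cross_terms_bound n m (Qi Si : mat) (a z : vec) (u p q : vec) KH Y e :
  0 < e -> 0 <= KH -> 0 <= Y ->
  (forall k, (k < n)%nat -> Rabs (a k) <= 9 * Y) ->
  (forall k, (k < n)%nat -> Rabs (p k) <= Y) -> (forall k, (k < m)%nat -> Rabs (q k) <= Y) ->
  (forall k l, (k < n)%nat -> (l < n)%nat -> Rabs (Qi k l) <= KH) ->
  (forall k l, (k < n)%nat -> (l < m)%nat -> Rabs (Si k l) <= KH) ->
  - (qform n n Qi a z + qform n n Qi z a + 2 * qform n m Si a u) + 2 * (dot n p z + dot m q u)
  <= 4 * e * (dot n z z + dot m u u) + 2 * cross_const n m KH e * (Y * Y).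
Proof.
  intros He HKH HY Ha Hp Hq HQ HS.
  assert (B1 := qform_young_l n n Qi a z KH 9 Y e He HKH ltac:(lra) HY Ha HQ).
  assert (B2 := qform_young_r n n Qi a z KH 9 Y e He HKH ltac:(lra) HY Ha HQ).
  assert (B3 := qform_young_l n m Si a u KH 9 Y e He HKH ltac:(lra) HY Ha HS).
  assert (B4 := dot_young n p z Y e He HY Hp).
  assert (B5 := dot_young m q u Y e He HY Hq).
  pose proof (Ropp_le_Rabs (qform n n Qi a z)). pose proof (Ropp_le_Rabs (qform n n Qi z a)).
  pose proof (Ropp_le_Rabs (qform n m Si a u)).
  pose proof (Rle_abs (dot n p z)). pose proof (Rle_abs (dot m q u)).
  unfold cross_const. lra.
Qed.

Section QPEstimate.

Variables (n m N : nat) (w : nat -> R) (T : mat) (Q Sm Rm : nat -> mat)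
  (y3 : vec) (y4 : nat -> vec) (y5 : vec) (y6 : nat -> vec) (alpha KT KH Y : R).
Hypotheses (Halpha : 0 < alpha) (HKT0 : 0 <= KT) (HKH0 : 0 <= KH) (HY : 0 <= Y).
Hypothesis Hw : forall i, (1 <= i <= N)%nat -> 0 < w i.
Hypothesis Hsw : sum1 N w = 2.
Hypothesis HTc : forall v, alpha * dot n v v <= qform n n T v v.
Hypothesis HHc : forall i, (1 <= i <= N)%nat -> forall a b,
  alpha * (dot n a a + dot m b b) <= qform n n (Q i) a a + 2 * qform n m (Sm i) a b + qform m m (Rm i) b b.
Hypothesis HKT : forall k l, (k < n)%nat -> (l < n)%nat -> Rabs (T k l) <= KT.
Hypothesis HKQ : forall i k l, (1 <= i <= N)%nat -> (k < n)%nat -> (l < n)%nat -> Rabs (Q i k l) <= KH.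
Hypothesis HKS : forall i k l, (1 <= i <= N)%nat -> (k < n)%nat -> (l < m)%nat -> Rabs (Sm i k l) <= KH.
Hypothesis Hy4 : forall i k, (1 <= i <= N)%nat -> (k < n)%nat -> Rabs (y4ext N y4 y5 i k) <= Y.
Hypothesis Hy6 : forall i k, (1 <= i <= N)%nat -> (k < m)%nat -> Rabs (y6 i k) <= Y.

Variables (Xb Z U : nat -> vec).
Hypothesis HXb : forall j k, (j <= N)%nat -> (k < n)%nat -> Rabs (Xb j k) <= 9 * Y.
Hypothesis HZ0 : forall k, (k < n)%nat -> Z O k = 0.
Hypothesis Hopt : QP_cost n m N w T Q Sm Rm y3 y4 y5 y6 (fun j k => Xb j k + Z j k) U
                  <= QP_cost n m N w T Q Sm Rm y3 y4 y5 y6 Xb (fun _ _ => 0).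

Let e := alpha / 8.
Let energy := sum1 N (fun i => w i * (dot n (Z i) (Z i) + dot m (U i) (U i))).

Lemma energy_nonneg : 0 <= energy.
Proof.
  apply sum1_nonneg. intros i Hi. pose proof (Hw i Hi).
  pose proof (dot_sq_nonneg n (Z i)). pose proof (dot_sq_nonneg m (U i)). nra.
Qed.

Lemma QP_cross_terms_bound :
  - sum1 N (fun i => w i * (qform n n (Q i) (Xb i) (Z i) + qform n n (Q i) (Z i) (Xb i)
                            + 2 * qform n m (Sm i) (Xb i) (U i)))
  + 2 * sum1 N (fun i => w i * (dot n (y4ext N y4 y5 i) (Z i) + dot m (y6 i) (U i)))
  <= 4 * e * energy + 4 * cross_const n m KH e * (Y * Y).
Proof.
  set (cc := 2 * cross_const n m KH e * (Y * Y)).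
  set (Cr := fun i => qform n n (Q i) (Xb i) (Z i) + qform n n (Q i) (Z i) (Xb i)
                      + 2 * qform n m (Sm i) (Xb i) (U i)).
  set (Li := fun i => dot n (y4ext N y4 y5 i) (Z i) + dot m (y6 i) (U i)).
  set (Ei := fun i => dot n (Z i) (Z i) + dot m (U i) (U i)).
  change (- sum1 N (fun i => w i * Cr i) + 2 * sum1 N (fun i => w i * Li i)
          <= 4 * e * sum1 N (fun i => w i * Ei i) + 4 * cross_const n m KH e * (Y * Y)).
  replace (- sum1 N (fun i => w i * Cr i) + 2 * sum1 N (fun i => w i * Li i))
    with (sum1 N (fun i => w i * (- Cr i + 2 * Li i)))
    by (rewrite (sum1_ext N _ (fun i => -1 * (w i * Cr i) + 2 * (w i * Li i))) by (intros; ring);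
        rewrite sum1_plus, !sum1_scal; ring).
  replace (4 * e * sum1 N (fun i => w i * Ei i) + 4 * cross_const n m KH e * (Y * Y))
    with (sum1 N (fun i => w i * (4 * e * Ei i + cc)))
    by (rewrite (sum1_ext N _ (fun i => 4 * e * (w i * Ei i) + cc * w i)) by (intros; ring);
        rewrite sum1_plus, !sum1_scal, Hsw; unfold cc; ring).
  apply sum1_le. intros i Hi.
  apply Rmult_le_compat_l; [left; apply Hw; auto |]. unfold cc, Cr, Li, Ei.
  apply node_cross_terms_bound; auto; [unfold e; lra | intros; apply HXb; auto; lia].
Qed.

Lemma QP_energy_bound :
  dot n (Z N) (Z N) + energy <= 2 * energy_const n m alpha KT KH * (Y * Y) / alpha.
Proof.
  pose proof (Rle_minus _ _ Hopt) as Hle. rewrite QP_cost_shift in Hle by auto.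
  assert (HTl : alpha * dot n (Z N) (Z N) <= qform n n T (Z N) (Z N)) by apply HTc.
  assert (HQl : alpha * energy <= sum1 N (fun i => w i * (qform n n (Q i) (Z i) (Z i)
                  + 2 * qform n m (Sm i) (Z i) (U i) + qform m m (Rm i) (U i) (U i)))).
  { unfold energy. rewrite <- sum1_scal. apply sum1_le. intros i Hi.
    pose proof (HHc i Hi (Z i) (U i)). pose proof (Hw i Hi). nra. }
  assert (HXbN : forall k, (k < n)%nat -> Rabs (Xb N k) <= 9 * Y) by (intros; apply HXb; auto).
  assert (He : 0 < e) by (unfold e; lra).
  pose proof (qform_young_l n n T (Xb N) (Z N) KT 9 Y e He HKT0 ltac:(lra) HY HXbN HKT) as HT1.
  pose proof (qform_young_r n n T (Xb N) (Z N) KT 9 Y e He HKT0 ltac:(lra) HY HXbN HKT) as HT2.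
  pose proof (Ropp_le_Rabs (qform n n T (Xb N) (Z N))). pose proof (Ropp_le_Rabs (qform n n T (Z N) (Xb N))).
  pose proof QP_cross_terms_bound. pose proof (dot_sq_nonneg n (Z N)). pose proof energy_nonneg.
  apply Rmult_le_reg_l with alpha; auto.
  replace (alpha * (2 * energy_const n m alpha KT KH * (Y * Y) / alpha))
    with (2 * energy_const n m alpha KT KH * (Y * Y)) by (field; lra).
  unfold energy_const. fold e. unfold e in *. nra.
Qed.

Lemma sqrt_le_const_mul v K : 0 <= K -> 0 <= v -> v <= K * (Y * Y) -> sqrt v <= sqrt K * Y.
Proof.
  intros. rewrite <- (sqrt_square Y), <- sqrt_mult by nra. apply sqrt_le_1_alt. auto.
Qed.

Lemma QP_norms_bound :
  Xnorm n N w (fun j k => Xb j k + Z j k) <= QP_bound_const n m alpha KT KH * Y /\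
  Unorm m N w U <= QP_bound_const n m alpha KT KH * Y.
Proof.
  pose proof QP_energy_bound as HE. pose proof energy_nonneg as HE0.
  set (kap := energy_const n m alpha KT KH) in *.
  assert (Hkap : 0 <= kap).
  { unfold kap, energy_const.
    pose proof (young_const_nonneg n n KT 9 (alpha / 8) ltac:(lra)).
    pose proof (cross_const_nonneg n m KH (alpha / 8) ltac:(lra)). lra. }
  assert (Hka : kap / alpha * (Y * Y) = kap * (Y * Y) / alpha) by (field; lra).
  assert (Hka0 : 0 <= kap / alpha) by (unfold Rdiv; apply Rmult_le_pos; [lra | left; apply Rinv_0_lt_compat; lra]).
  pose proof (pos_INR n). pose proof (dot_sq_nonneg n (Z N)). assert (0 <= Y * Y) by nra.
  unfold QP_bound_const, Xnorm, Unorm. fold kap.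
  split; apply sqrt_le_const_mul; try lra.
  - apply Rplus_le_le_0_compat; [apply dot_sq_nonneg |]. apply sum1_nonneg. intros i Hi.
    pose proof (Hw i Hi). pose proof (dot_sq_nonneg n (fun k => Xb i k + Z i k)). nra.
  - assert (HdXb : forall j, (j <= N)%nat -> dot n (Xb j) (Xb j) <= INR n * (9 * Y * (9 * Y)))
      by (intros; apply dot_bounded; intros; apply HXb; auto).
    pose proof (dot_sum_le n (Xb N) (Z N)). pose proof (HdXb N (le_n N)).
    assert (Hn2 : sum1 N (fun i => w i * dot n (fun k => Xb i k + Z i k) (fun k => Xb i k + Z i k))
        <= sum1 N (fun i => 2 * (INR n * (9 * Y * (9 * Y))) * w i
                            + 2 * (w i * (dot n (Z i) (Z i) + dot m (U i) (U i))))).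
    { apply sum1_le. intros i Hi. pose proof (Hw i Hi). pose proof (dot_sum_le n (Xb i) (Z i)).
      pose proof (HdXb i ltac:(lia)). pose proof (dot_sq_nonneg m (U i)). nra. }
    rewrite sum1_plus, !sum1_scal, Hsw in Hn2. fold energy in Hn2.
    nra.
  - apply sum1_nonneg. intros i Hi. pose proof (Hw i Hi). pose proof (dot_sq_nonneg m (U i)). nra.
  - assert (sum1 N (fun i => w i * dot m (U i) (U i)) <= energy).
    { apply sum1_le. intros i Hi. pose proof (Hw i Hi). pose proof (dot_sq_nonneg n (Z i)). nra. }
    nra.
Qed.

End QPEstimate.

Lemma radau_nodes_increasing N tau w : radau N tau w ->
  forall a b, (a < b <= N)%nat -> tau a < tau b.
Proof.
  intros [H0 [H1 [Hinc _]]] a b. induction b; intros Hab; [lia |].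
  destruct (Nat.eq_dec a b) as [Heq | Hne].
  - subst b. destruct a; [lra | apply Hinc; lia].
  - assert (tau a < tau b) by (apply IHb; lia).
    destruct b; [lia |]. assert (tau (S b) < tau (S (S b))) by (apply Hinc; lia). lra.
Qed.

Lemma radau_nodes_distinct N tau w : radau N tau w ->
  forall a b, (a <= N)%nat -> (b <= N)%nat -> a <> b -> tau a <> tau b.
Proof.
  intros Hr a b Ha Hb Hab.
  destruct (Nat.lt_total a b) as [Hlt | [Heq | Hlt]]; [| lia |].
  - pose proof (radau_nodes_increasing N tau w Hr a b ltac:(lia)). lra.
  - pose proof (radau_nodes_increasing N tau w Hr b a ltac:(lia)). lra.
Qed.

Lemma radau_nodes_in_interval N tau w : radau N tau w ->
  forall i, (1 <= i <= N)%nat -> -1 <= tau i <= 1.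
Proof.
  intros Hr i Hi. pose proof Hr as [H0 [_ [_ [HN _]]]].
  pose proof (radau_nodes_increasing N tau w Hr 0 i ltac:(lia)).
  destruct (Nat.eq_dec i N) as [-> | Hne]; [lra |].
  pose proof (radau_nodes_increasing N tau w Hr i N ltac:(lia)). lra.
Qed.

(* Exactness of the rule for the constant polynomial 1. *)
Lemma radau_weights_sum N tau w : radau N tau w -> sum1 N w = 2.
Proof.
  intros [_ [_ [_ [_ [_ Hq]]]]]. pose proof (Hq O ltac:(lia)) as H. simpl in H.
  rewrite (sum1_ext N _ w) in H by (intros; ring). rewrite H. field.
Qed.

Lemma enorm_le_ynorm_y1 n m N y1 y2 y3 y4 y5 y6 i : (1 <= i <= N)%nat ->
  enorm n (y1 i) <= ynorm n m N y1 y2 y3 y4 y5 y6.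
Proof.
  intros. eapply Rle_trans; [| apply Rmax_l]. apply (max1_ge N (fun i => enorm n (y1 i))); auto.
Qed.
Lemma enorm_le_ynorm_y2 n m N y1 y2 y3 y4 y5 y6 : enorm n y2 <= ynorm n m N y1 y2 y3 y4 y5 y6.
Proof. eapply Rle_trans; [| apply Rmax_r]. apply Rmax_l. Qed.
Lemma enorm_le_ynorm_y4ext n m N y1 y2 y3 y4 y5 y6 i : (1 <= i <= N)%nat ->
  enorm n (y4ext N y4 y5 i) <= ynorm n m N y1 y2 y3 y4 y5 y6.
Proof.
  intros. unfold y4ext, ynorm. do 3 (eapply Rle_trans; [| apply Rmax_r]).
  destruct (Nat.eqb_spec i N).
  - eapply Rle_trans; [| apply Rmax_r]. apply Rmax_l.
  - eapply Rle_trans; [| apply Rmax_l]. apply (max1_ge (N - 1) (fun i => enorm n (y4 i))). lia.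
Qed.
Lemma enorm_le_ynorm_y6 n m N y1 y2 y3 y4 y5 y6 i : (1 <= i <= N)%nat ->
  enorm m (y6 i) <= ynorm n m N y1 y2 y3 y4 y5 y6.
Proof.
  intros. unfold ynorm. do 5 (eapply Rle_trans; [| apply Rmax_r]).
  apply (max1_ge N (fun i => enorm m (y6 i))); auto.
Qed.

Lemma inf_norm_rowsum_le d (M : mat) c k : inf_norm d d M <= c -> (k < d)%nat ->
  sumR d (fun l => Rabs (M k l)) <= c.
Proof.
  intros H Hk. eapply Rle_trans; [| exact H].
  apply (maxR_ge d (fun k => sumR d (fun l => Rabs (M k l)))). auto.
Qed.

(* The comparison point with zero control: [Xb = y2 + W] where [W] solves the
   collocation system with right-hand side [y1 + A y2]; the constant [y2] is
   annihilated by [D] since its rows sum to zero. *)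
Lemma QP_bounded_feasible_point n m N (D Dinv : mat) (A B : nat -> mat) y1 y2 Y :
  (forall i j, (1 <= i <= N)%nat -> (1 <= j <= N)%nat ->
     sum1 N (fun k => D i k * Dinv k j) = if Nat.eqb i j then 1 else 0) ->
  (forall i, (1 <= i <= N)%nat -> sum1 N (fun j => Rabs (Dinv i j)) <= 2) ->
  (forall i, (1 <= i <= N)%nat -> sumR (S N) (fun j => D i j) = 0) ->
  (forall j k, (1 <= j <= N)%nat -> (k < n)%nat -> sumR n (fun l => Rabs (A j k l)) <= / 4) ->
  0 <= Y -> (forall i k, (1 <= i <= N)%nat -> (k < n)%nat -> Rabs (y1 i k) <= Y) ->
  (forall k, (k < n)%nat -> Rabs (y2 k) <= Y) ->
  exists Xb, QP_feasible n m N D A B y1 y2 Xb (fun _ _ => 0) /\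
    forall j k, (j <= N)%nat -> (k < n)%nat -> Rabs (Xb j k) <= 9 * Y.
Proof.
  intros HDD HDinv Hrow HA HY Hy1 Hy2.
  set (r := fun i k => y1 i k + mv n (A i) y2 k).
  assert (Hr : forall i k, (1 <= i <= N)%nat -> (k < n)%nat -> Rabs (r i k) <= 2 * Y).
  { intros i k Hi Hk. unfold r. eapply Rle_trans; [apply Rabs_triang |].
    assert (Rabs (mv n (A i) y2 k) <= / 4 * Y) by (apply rowsum_bound; auto).
    pose proof (Hy1 i k Hi Hk). lra. }
  destruct (collocation_system_solvable N n D Dinv A r (2 * Y) HDD HDinv HA ltac:(lra) Hr)
    as [W [HWeq HWb]].
  exists (fun j k => if Nat.eqb j O then y2 k else y2 k + W j k). split.
  - split; [intros; reflexivity |]. intros i Hi k Hk.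
    rewrite sumR_shift. simpl.
    rewrite (sumR_ext N _ (fun j => y2 k * D i (S j) + D i (S j) * W (S j) k)) by (intros; ring).
    rewrite sumR_plus, sumR_scal.
    change (sumR N (fun j => D i (S j) * W (S j) k)) with (sum1 N (fun j => D i j * W j k)).
    rewrite HWeq by auto. pose proof (Hrow i Hi) as Hz. rewrite sumR_shift in Hz.
    destruct (Nat.eqb_spec i O); [lia |].
    unfold r, mv. rewrite (sumR_zero m) by (intros; ring).
    rewrite (sumR_ext n (fun l => A i k l * (y2 l + W i l)) (fun l => A i k l * W i l + A i k l * y2 l))
      by (intros; ring).
    rewrite sumR_plus.
    assert (E : D i O * y2 k + y2 k * sumR N (fun j => D i (S j)) = 0)
      by (replace 0 with (y2 k * 0) by ring; rewrite <- Hz; ring).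
    lra.
  - intros j k Hj Hk. pose proof (Hy2 k Hk). destruct (Nat.eqb_spec j O); [lra |].
    eapply Rle_trans; [apply Rabs_triang |]. pose proof (HWb j k Hj Hk). lra.
Qed.

Lemma HessH_blocks_coercive n m f Df D2f xs us ls alpha t :
  f_C2_near_traj n m f Df D2f xs us -> -1 <= t <= 1 ->
  smallest_eigenvalue_gt (n + m) (HessH n D2f xs us ls t) alpha ->
  forall a b, alpha * (dot n a a + dot m b b) <=
    qform n n (Qmat n D2f xs us ls t) a a + 2 * qform n m (Smat n D2f xs us ls t) a b
    + qform m m (Rmat n D2f xs us ls t) b b.
Proof.
  intros Hf Ht He a b. pose proof (HessH_symm n m f Df D2f xs us ls Hf t Ht) as Hs.
  rewrite <- dot_catv. unfold Qmat, Smat, Rmat. rewrite <- qform_catv by auto.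
  apply qform_ge_of_smallest_eigenvalue_gt; auto.
Qed.

Theorem lemma5p1 (n m : nat) (f : vec -> vec -> vec) (C : vec -> R)
  (Df : nat -> vec -> vec -> nat -> R) (D2f : nat -> vec -> vec -> nat -> nat -> R)
  (DC : vec -> nat -> R) (D2C : vec -> nat -> nat -> R)
  (xs us ls : R -> vec) :
  cont_traj n xs -> cont_traj m us -> cont_traj n ls ->
  f_C2_near_traj n m f Df D2f xs us ->
  C_C2_near n C DC D2C (xs 1) ->
  (* (A2) *)
  (exists alpha, 0 < alpha /\
     smallest_eigenvalue_gt n (D2C (xs 1)) alpha /\
     forall t, -1 <= t <= 1 ->
       smallest_eigenvalue_gt (n + m) (HessH n D2f xs us ls t) alpha) ->
  (* (A3) *)
  (forall t, -1 <= t <= 1 ->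
     inf_norm n n (Amat Df xs us t) <= / 4 /\
     inf_norm n n (trm (Amat Df xs us t)) <= / 4) ->
  (* (P1) *)
  (forall (N : nat) (tau w : nat -> R) (D : mat), (2 <= N)%nat ->
     radau N tau w -> is_diff_matrix N tau D -> P1 N D) ->
  exists c : R,
    forall (N : nat) (tau w : nat -> R) (D : mat), (2 <= N)%nat ->
      radau N tau w -> is_diff_matrix N tau D ->
      forall (y1 : nat -> vec) (y2 y3 : vec) (y4 : nat -> vec) (y5 : vec)
             (y6 : nat -> vec) (X U : nat -> vec),
        QP_solution n m N w D
          (fun i => Amat Df xs us (tau i))
          (fun i => Bmat n Df xs us (tau i))
          (fun i => Qmat n D2f xs us ls (tau i))
          (fun i => Smat n D2f xs us ls (tau i))
          (fun i => Rmat n D2f xs us ls (tau i))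
          (D2C (xs 1)) y1 y2 y3 y4 y5 y6 X U ->
        Xnorm n N w X <= c * ynorm n m N y1 y2 y3 y4 y5 y6 /\
        Unorm m N w U <= c * ynorm n m N y1 y2 y3 y4 y5 y6.
Proof.
  intros Hxs Hus Hls Hf HC [alpha [Ha [HaT HaH]]] HA3 HP1.
  destruct (HessH_bounded n m f Df D2f xs us ls Hxs Hus Hls Hf) as [KH [HKH0 HKH]].
  destruct (mat_entries_bounded n (D2C (xs 1))) as [KT [HKT0 HKT]].
  exists (QP_bound_const n m alpha KT KH).
  intros N tau w D HN Hrad Hdiff y1 y2 y3 y4 y5 y6 X U [Hfeas Hopt].
  destruct (HP1 N tau w D HN Hrad Hdiff) as [Dinv [HDD [_ HDinv]]].
  pose proof (radau_nodes_in_interval N tau w Hrad) as Htau.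
  set (Y := ynorm n m N y1 y2 y3 y4 y5 y6).
  assert (HY : 0 <= Y) by (eapply Rle_trans; [apply sqrt_pos | apply enorm_le_ynorm_y2]).
  destruct (QP_bounded_feasible_point n m N D Dinv (fun i => Amat Df xs us (tau i))
              (fun i => Bmat n Df xs us (tau i)) y1 y2 Y HDD HDinv
              (diff_matrix_rowsum N tau D Hdiff (radau_nodes_distinct N tau w Hrad)))
    as [Xb [HXbf HXb]]; auto.
  { intros j k Hj Hk. apply inf_norm_rowsum_le; auto. apply (HA3 _ (Htau j Hj)). }
  { intros i k Hi Hk. eapply Rle_trans; [apply enorm_ge_coord; eauto | apply enorm_le_ynorm_y1; auto]. }
  { intros k Hk. eapply Rle_trans; [apply enorm_ge_coord; eauto | apply enorm_le_ynorm_y2]. }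
  set (Z := fun j k => X j k - Xb j k).
  replace X with (fun j k => Xb j k + Z j k) in *
    by (apply functional_extensionality; intro j; apply functional_extensionality; intro k; unfold Z; ring).
  apply (QP_norms_bound n m N w (D2C (xs 1)) (fun i => Qmat n D2f xs us ls (tau i))
           (fun i => Smat n D2f xs us ls (tau i)) (fun i => Rmat n D2f xs us ls (tau i))
           y3 y4 y5 y6 alpha KT KH Y); auto.
  - destruct Hrad as [_ [_ [_ [_ [Hw _]]]]]. exact Hw.
  - exact (radau_weights_sum N tau w Hrad).
  - apply qform_ge_of_smallest_eigenvalue_gt; auto. apply (C2_hessian_symm n C DC); auto.
  - intros i Hi. apply (HessH_blocks_coercive n m f Df); auto.
  - intros i k l Hi Hk Hl. apply HKH; auto; lia.
  - intros i k l Hi Hk Hl. apply HKH; auto; lia.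
  - intros i k Hi Hk. eapply Rle_trans; [apply enorm_ge_coord; eauto | apply enorm_le_ynorm_y4ext; auto].
  - intros i k Hi Hk. eapply Rle_trans; [apply enorm_ge_coord; eauto | apply enorm_le_ynorm_y6; auto].
  - intros k Hk. destruct Hfeas as [H0 _], HXbf as [HX0 _]. specialize (H0 k Hk). specialize (HX0 k Hk). simpl in H0. lra.
Qed.
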